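(* Fix $q\in(0,1]$. For every $d\ge1$, $\bar\sigma_{1,q}^2(2,d)=q/d$, and for fixed $s\in(0,2]$, as $d\to\infty$, $$\bar\sigma_{1,q}^2(s,d)=\frac qd+\frac{(3-q)(2-s)}{4d^2}+o\Big(\frac1{d^2}\Big).$$
   Context: For $q\in(0,1]$, integer $d\ge1$ and $s>0$: $h_d(t)=\binom dtq^t(1-q)^{d-t}$, $I_{1,q}(s,d)=q^{-s}2^{s/2}\sum_{t=1}^dh_d(t)\Gamma(t/2+s/2)/\Gamma(t/2)$, and $\bar\sigma_{1,q}(s,d)=I_{1,q}(s,d)^{-1/s}$. (This is the critical weight standard deviation preserving $\mathbb E\|x^{(k)}\|^s$ for the zero-bias width-$d$ linear network $x^{(k+1)}=(W^{(k+1)}x^{(k)})\odot\varepsilon^{(k+1)}$ with i.i.d. $\mathcal N(0,\sigma^2)$ weights and dropout vectors with i.i.d. components equal to $0$ w.p. $1-q$ and $1/q$ w.p. $q$.) *)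

From Stdlib Require Import Reals.
From Coquelicot Require Import Coquelicot.
Open Scope R_scope.

Definition Gamma (x : R) : R :=
  RInt_gen (fun t => Rpower t (x - 1) * exp (- t))
           (at_right 0) (Rbar_locally p_infty).

Definition h (q : R) (d t : nat) : R :=
  Binomial.C d t * q ^ t * (1 - q) ^ (d - t).

(* I_{1,q}(s,d) = q^{-s} 2^{s/2} sum_{t=1}^d h_d(t) Gamma(t/2+s/2)/Gamma(t/2);
   the sum over t = 1..d is written as sum_{i=0}^{d-1} with t = i+1. *)
Definition I1q (q s : R) (d : nat) : R :=
  Rpower q (- s) * Rpower 2 (s / 2) *
  sum_f_R0 (fun i => h q d (S i) *
              Gamma (INR (S i) / 2 + s / 2) / Gamma (INR (S i) / 2)) (d - 1).

Definition sigma_bar (q s : R) (d : nat) : R := Rpower (I1q q s d) (- (1 / s)).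

(* Write a = s/2 and let T ~ Bin(d, q).  Grouping the factors of I_{1,q},
     I_{1,q}(s,d) = q^(-s) E[G_a(T)],  G_a(0) = 0,
     G_a(t) = 2^a Gamma(t/2 + a) / Gamma(t/2)  (t >= 1),
   so that sigma_bar^2 = q^2 E[G_a(T)]^(-1/a).
   - For s = 2 (a = 1), Gamma(x+1) = x Gamma(x) gives G_1(t) = t, hence
     E[G_1(T)] = dq and sigma_bar^2 = q/d exactly.
   - For 0 < a <= 1 we show, uniformly,
       Gamma(x+a)/Gamma(x) = x^a (1 + a(a-1)/(2x)) + O(x^(a-3/2))
     by integrating a third-order Taylor bound for y^a around y = x against
     the Gamma(x) density and evaluating its polynomial moments exactly.
     Hence G_a(t) = t^a + a(a-1) t^(a-1) + O(t^(a-3/2)); expanding around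
     m = dq and using the first four central binomial moments,
       E[G_a(T)] = m^a (1 + c/m) + O(m^(a-3/2)),  c = a(a-1)(3-q)/2.
   - Finally sigma_bar^2 = (q^2/m)(1+z)^(-1/a) with z = c/m + O(m^(-3/2));
     a second-order Taylor bound for (1+z)^(-1/a) shows that
     d^2 (sigma_bar^2 - q/d - (3-q)(2-s)/(4d^2)) = O(m^(-1/2)) -> 0.
   The file develops, in order: elementary facts on real powers, Taylor
   bounds from the mean value theorem, the Gamma integral and its moments,
   binomial expectations and central moments, the expansion of E[G_a(T)],
   and the two statements of the theorem. *)

From Stdlib Require Import Reals Lra Psatz Lia Classical.
From Stdlib Require Import ssreflect.
From Coquelicot Require Import Coquelicot.
Open Scope R_scope.

Lemma Rpower_gt_0 x p : 0 < Rpower x p.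
Proof. exact: exp_pos. Qed.

Lemma is_derive_Rpower p y : 0 < y ->
  is_derive (fun z => Rpower z p) y (p * Rpower y (p - 1)).
Proof. by move=> Hy; apply is_derive_Reals; apply: derivable_pt_lim_power. Qed.

Lemma is_derive_scal_Rpower c p t : 0 < t ->
  is_derive (fun z => c * Rpower z p) t (c * p * Rpower t (p - 1)).
Proof. move=> Ht; rewrite Rmult_assoc; apply: is_derive_scal; exact: is_derive_Rpower. Qed.

Lemma continuous_Rpower p y : 0 < y -> continuous (fun z => Rpower z p) y.
Proof. move=> Hy; apply: ex_derive_continuous; eexists; exact: is_derive_Rpower. Qed.

Lemma Rpower_1_base p : Rpower 1 p = 1.
Proof. by rewrite /Rpower ln_1 Rmult_0_r exp_0. Qed.

Lemma Rpower_le_base_neg a b p : p <= 0 -> 0 < a <= b -> Rpower b p <= Rpower a p.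
Proof.
  move=> Hp Hab; rewrite -(Ropp_involutive p) (Rpower_Ropp b) (Rpower_Ropp a).
  apply: Rinv_le_contravar; first exact: Rpower_gt_0.
  apply: Rle_Rpower_l; lra.
Qed.

Lemma Rpower_div x y p : 0 < x -> 0 < y -> Rpower (x / y) p = Rpower x p / Rpower y p.
Proof.
  move=> Hx Hy; rewrite /Rdiv -Rpower_mult_distr //; last exact: Rinv_0_lt_compat.
  by rewrite -Rpower_Ropp /Rpower ln_Rinv // -Ropp_mult_distr_r Ropp_mult_distr_l.
Qed.

Lemma Rpower_le_1 y p : 0 < y <= 1 -> 0 <= p -> Rpower y p <= 1.
Proof. move=> Hy Hp; rewrite -(Rpower_1_base p); apply: Rle_Rpower_l; lra. Qed.

Lemma Rpower_le_1_neg y p : 1 <= y -> p <= 0 -> Rpower y p <= 1.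
Proof. move=> Hy Hp; rewrite -(Rpower_1_base p); apply: Rpower_le_base_neg; lra. Qed.

Lemma Rpower_ge_1 y p : 1 <= y -> 0 <= p -> 1 <= Rpower y p.
Proof. move=> Hy Hp; rewrite -(Rpower_1_base p); apply: Rle_Rpower_l; lra. Qed.

Lemma Rpower_2_le p n : p <= INR n -> Rpower 2 p <= 2 ^ n.
Proof. move=> Hp; rewrite -Rpower_pow; last lra; apply: Rle_Rpower; lra. Qed.

Lemma Rpower_neg_le_half t p : /2 <= t -> p <= 0 -> Rpower t p <= Rpower 2 (- p).
Proof.
  move=> Ht Hp.
  have -> : Rpower 2 (- p) = Rpower (/2) p
    by rewrite /Rpower ln_Rinv; [congr exp; ring | lra].
  apply: Rpower_le_base_neg; lra.
Qed.

Lemma Rpower_sq x p : Rpower x p ^ 2 = Rpower x (2 * p).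
Proof. by rewrite /= Rmult_1_r -Rpower_plus; congr Rpower; ring. Qed.

Lemma Rpower_half_sq x : 0 < x -> Rpower x (/2) * Rpower x (/2) = x.
Proof.
  move=> Hx; rewrite -Rpower_plus (_ : /2 + /2 = 1); last field.
  exact: Rpower_1.
Qed.

Lemma Rpower_half_shift x p k : 0 < x ->
  Rpower x (p + INR k / 2) = Rpower x p * Rpower x (/2) ^ k.
Proof.
  move=> Hx; rewrite Rpower_plus; congr Rmult.
  by rewrite -Rpower_pow ?Rpower_mult; [congr Rpower; field | exact: Rpower_gt_0].
Qed.

Section TaylorBounds.

Variable lo : R.

Lemma between_bound x y c : lo <= x -> lo <= y -> Rmin x y <= c <= Rmax x y ->
  lo <= c /\ Rabs (c - x) <= Rabs (y - x).
Proof.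
  move=> Hx Hy [H1 H2]; rewrite /Rmin /Rmax in H1 H2 *.
  by destruct (Rle_dec x y); split; try lra; rewrite /Rabs; repeat destruct Rcase_abs; lra.
Qed.

Lemma mvt_half_line (f df : R -> R) x y :
  (forall t, lo <= t -> is_derive f t (df t)) -> lo <= x -> lo <= y ->
  exists c, lo <= c /\ Rabs (c - x) <= Rabs (y - x) /\ f y - f x = df c * (y - x).
Proof.
  move=> Hd Hx Hy.
  have Hin : forall z, Rmin x y <= z -> lo <= z
    by move=> z Hz; apply: Rle_trans Hz; apply: Rmin_glb.
  case: (MVT_gen f x y df) => [z [Hz _]|z [Hz _]|c [Hc Heq]].
  - apply: Hd; apply: Hin; lra.
  - apply/continuity_pt_filterlim; apply: ex_derive_continuous.
    eexists; apply: Hd; exact: Hin.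
  - have [Hc1 Hc2] := between_bound x y c Hx Hy Hc.
    by exists c.
Qed.

Lemma taylor1_bound (f f1 : R -> R) M x y :
  (forall t, lo <= t -> is_derive f t (f1 t)) ->
  (forall t, lo <= t -> Rabs (f1 t) <= M) ->
  lo <= x -> lo <= y ->
  Rabs (f y - f x) <= M * Rabs (y - x).
Proof.
  move=> Hd Hb Hx Hy.
  have [c [Hc [_ ->]]] := mvt_half_line f f1 x y Hd Hx Hy.
  rewrite Rabs_mult; apply: Rmult_le_compat_r; [exact: Rabs_pos | exact: Hb].
Qed.

Lemma taylor2_bound (f f1 f2 : R -> R) M x y :
  (forall t, lo <= t -> is_derive f t (f1 t)) ->
  (forall t, lo <= t -> is_derive f1 t (f2 t)) ->
  (forall t, lo <= t -> Rabs (f2 t) <= M) ->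
  lo <= x -> lo <= y ->
  Rabs (f y - f x - f1 x * (y - x)) <= M * (y - x) ^ 2.
Proof.
  move=> Hd1 Hd2 Hb Hx Hy.
  (* apply the mean value theorem to f minus its tangent at x *)
  set g := fun t => f t - f1 x * t.
  have Hg : forall t, lo <= t -> is_derive g t (f1 t - f1 x).
  { move=> t Ht; rewrite /g -{2}(Rmult_1_r (f1 x)).
    apply: is_derive_minus; [exact: Hd1 | apply: is_derive_scal; exact: is_derive_id]. }
  have [c [Hc [Hcx Heq]]] := mvt_half_line g _ x y Hg Hx Hy.
  have Hc1 := taylor1_bound f1 f2 M x c Hd2 Hb Hx Hc.
  rewrite /g in Heq.
  rewrite (_ : f y - f x - f1 x * (y - x) = (f1 c - f1 x) * (y - x)); last lra.
  have HM : 0 <= M by apply: Rle_trans (Hb x Hx); exact: Rabs_pos.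
  rewrite Rabs_mult -pow2_abs /=.
  apply: Rle_trans (_ : M * Rabs (c - x) * Rabs (y - x) <= _).
  - apply: Rmult_le_compat_r Hc1; exact: Rabs_pos.
  - rewrite Rmult_1_r -Rmult_assoc; apply: Rmult_le_compat_r; [exact: Rabs_pos | exact: Rmult_le_compat_l].
Qed.

Lemma taylor3_bound (f f1 f2 f3 : R -> R) M x y :
  (forall t, lo <= t -> is_derive f t (f1 t)) ->
  (forall t, lo <= t -> is_derive f1 t (f2 t)) ->
  (forall t, lo <= t -> is_derive f2 t (f3 t)) ->
  (forall t, lo <= t -> Rabs (f3 t) <= M) ->
  lo <= x -> lo <= y ->
  Rabs (f y - f x - f1 x * (y - x) - f2 x / 2 * (y - x) ^ 2) <= M * Rabs (y - x) ^ 3.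
Proof.
  move=> Hd1 Hd2 Hd3 Hb Hx Hy.
  (* apply the mean value theorem to f minus its second-order Taylor polynomial *)
  set g := fun t => f t - f1 x * t - f2 x / 2 * (t - x) ^ 2.
  have Hg : forall t, lo <= t -> is_derive g t (f1 t - f1 x - f2 x * (t - x)).
  { move=> t Ht; rewrite /g; auto_derive; first by exists (f1 t); exact: Hd1.
    rewrite (is_derive_unique _ _ _ (Hd1 t Ht)).
    change (1 * f1 t + - (f1 x * 1) + - (f2 x / 2 * (1 * ((1 + 1) * ((t + - x) * 1))))
            = f1 t - f1 x - f2 x * (t - x)); field. }
  have [c [Hc [Hcx Heq]]] := mvt_half_line g _ x y Hg Hx Hy.
  have Hc2 := taylor2_bound f1 f2 f3 M x c Hd2 Hd3 Hb Hx Hc.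
  rewrite /g in Heq.
  rewrite (_ : f y - f x - f1 x * (y - x) - f2 x / 2 * (y - x) ^ 2
             = (f1 c - f1 x - f2 x * (c - x)) * (y - x)); last by rewrite -Heq; field.
  have HM : 0 <= M by apply: Rle_trans (Hb x Hx); exact: Rabs_pos.
  rewrite -pow2_abs in Hc2; rewrite Rabs_mult.
  apply: Rle_trans (_ : M * Rabs (c - x) ^ 2 * Rabs (y - x) <= _).
  - apply: Rmult_le_compat_r Hc2; exact: Rabs_pos.
  - have Hcy : Rabs (c - x) ^ 2 <= Rabs (y - x) ^ 2
      by apply: pow_incr; split; [exact: Rabs_pos | done].
    rewrite (_ : M * Rabs (y - x) ^ 3 = M * Rabs (y - x) ^ 2 * Rabs (y - x)); last ring.
    apply: Rmult_le_compat_r; [exact: Rabs_pos | exact: Rmult_le_compat_l].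
Qed.

End TaylorBounds.

Lemma cube_le_split e z : 0 < e -> 2 * Rabs z ^ 3 <= e * z ^ 2 + z ^ 4 / e.
Proof.
  move=> He; set w := Rabs z; have Hw : 0 <= w by exact: Rabs_pos.
  have -> : z ^ 2 = w ^ 2 by rewrite /w pow2_abs.
  have -> : z ^ 4 = (w ^ 2) ^ 2 by rewrite /w pow2_abs; ring.
  apply: (Rmult_le_reg_r e) => //.
  rewrite (_ : (e * w ^ 2 + (w ^ 2) ^ 2 / e) * e = e * e * w ^ 2 + (w ^ 2) ^ 2); last by field; lra.
  have := pow2_ge_0 (w * (e - w)); nra.
Qed.

Lemma Rpower_taylor3 a u : 0 < a <= 1 -> 0 < u ->
  Rabs (Rpower u a - (1 + a * (u - 1) + a * (a - 1) / 2 * (u - 1) ^ 2))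
  <= 16 * Rabs (u - 1) ^ 3.
Proof.
  move=> Ha Hu; case: (Rle_dec (/2) u) => Hu2.
  - (* near 1: the third derivative is bounded by 2 * 2^3 on [1/2, oo) *)
    have H := taylor3_bound (/2) (fun z => Rpower z a) (fun z => a * Rpower z (a - 1))
      (fun z => a * (a - 1) * Rpower z (a - 1 - 1))
      (fun z => a * (a - 1) * (a - 1 - 1) * Rpower z (a - 1 - 1 - 1)) 16 1 u.
    rewrite !Rpower_1_base in H.
    rewrite (_ : Rpower u a - (1 + a * (u - 1) + a * (a - 1) / 2 * (u - 1) ^ 2)
               = Rpower u a - 1 - a * 1 * (u - 1) - a * (a - 1) * 1 / 2 * (u - 1) ^ 2);
      last field.
    apply: H; try lra.
    + move=> t Ht; apply: is_derive_Rpower; lra.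
    + move=> t Ht; apply: is_derive_scal_Rpower; lra.
    + move=> t Ht; apply: is_derive_scal_Rpower; lra.
    + move=> t Ht; rewrite Rabs_mult (Rabs_pos_eq (Rpower _ _)); last exact: Rlt_le (Rpower_gt_0 _ _).
      have Hc : Rabs (a * (a - 1) * (a - 1 - 1)) <= 2.
      { rewrite (_ : a * (a - 1) * (a - 1 - 1) = a * ((1 - a) * (2 - a))); last ring.
        have : 0 <= (1 - a) * (2 - a) <= 2 by nra.
        move=> ?; rewrite Rabs_pos_eq; nra. }
      have := Rpower_neg_le_half t (a - 1 - 1 - 1) Ht ltac:(lra).
      have := Rpower_2_le (- (a - 1 - 1 - 1)) 3 ltac:(simpl; lra).
      have := Rpower_gt_0 t (a - 1 - 1 - 1); have := Rabs_pos (a * (a - 1) * (a - 1 - 1)).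
      rewrite /=; nra.
  - (* far from 1: both u^a and the polynomial lie in [0, 1] while |u - 1| > 1/2 *)
    have : 0 < Rpower u a <= 1 by split; [exact: Rpower_gt_0 | apply: Rpower_le_1; lra].
    rewrite (Rabs_left (u - 1)); last lra.
    set v := u - 1 => Hua.
    have Hv : -1 < v < - / 2 by rewrite /v; lra.
    have : 0 <= 1 + a * v + a * (a - 1) / 2 * v ^ 2 <= 1.
    { have : a * (a - 1) <= 0 by nra.
      have : 0 <= v ^ 2 <= 1 by nra.
      move=> ? ?; split; nra. }
    move=> ?; apply: Rabs_le; split; nra.
Qed.

Lemma Rpower_taylor_scaled a x y e : 0 < a <= 1 -> 0 < x -> 0 < y -> 0 < e ->
  Rabs (Rpower y a - Rpower x a * (1 + a * (y / x - 1) + a * (a - 1) / 2 * (y / x - 1) ^ 2))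
  <= Rpower x a * (8 * (e * (y / x - 1) ^ 2 + (y / x - 1) ^ 4 / e)).
Proof.
  move=> Ha Hx Hy He; have Hxa := Rpower_gt_0 x a.
  have HT := Rpower_taylor3 a (y / x) Ha ltac:(apply: Rdiv_lt_0_compat; lra).
  have Hsplit := cube_le_split e (y / x - 1) He.
  rewrite Rpower_div // in HT.
  rewrite (_ : Rpower y a - _ = Rpower x a * (Rpower y a / Rpower x a
              - (1 + a * (y / x - 1) + a * (a - 1) / 2 * (y / x - 1) ^ 2))); last by field; lra.
  rewrite Rabs_mult Rabs_pos_eq; last lra.
  apply: Rmult_le_compat_l; lra.
Qed.

Lemma Rpower_neg_le_4 w p : /2 <= w -> -2 <= p <= 0 -> Rpower w p <= 4.
Proof.
  move=> Hw Hp; apply: Rle_trans (Rpower_neg_le_half w p Hw ltac:(lra)) _.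
  have := Rpower_2_le (- p) 2 ltac:(simpl; lra); rewrite /=; lra.
Qed.

Lemma Rpower_taylor1 a w : 0 < a <= 1 -> /2 <= w ->
  Rabs (Rpower w (a - 1) - 1) <= 4 * Rabs (w - 1).
Proof.
  move=> Ha Hw.
  have H := taylor1_bound (/2) (fun z => Rpower z (a - 1))
    (fun z => (a - 1) * Rpower z (a - 1 - 1)) 4 1 w.
  rewrite Rpower_1_base in H; apply: H; try lra.
  - move=> t Ht; apply: is_derive_Rpower; lra.
  - move=> t Ht; rewrite Rabs_mult (Rabs_pos_eq (Rpower _ _)); last exact: Rlt_le (Rpower_gt_0 _ _).
    have := Rpower_neg_le_4 t (a - 1 - 1) Ht ltac:(lra).
    have := Rpower_gt_0 t (a - 1 - 1).
    rewrite Rabs_left1; [nra | lra].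
Qed.

Lemma Rpower_neg_taylor2 b z : 1 <= b -> - / 2 <= z ->
  Rabs (Rpower (1 + z) (- b) - 1 + b * z) <= b * (b + 1) * Rpower 2 (b + 2) * z ^ 2.
Proof.
  move=> Hb Hz.
  have H := taylor2_bound (/2) (fun t => Rpower t (- b)) (fun t => - b * Rpower t (- b - 1))
    (fun t => - b * (- b - 1) * Rpower t (- b - 1 - 1)) (b * (b + 1) * Rpower 2 (b + 2)) 1 (1 + z).
  rewrite !Rpower_1_base in H.
  rewrite (_ : Rpower (1 + z) (- b) - 1 + b * z
             = Rpower (1 + z) (- b) - 1 - - b * 1 * (1 + z - 1)); last ring.
  rewrite (_ : z ^ 2 = (1 + z - 1) ^ 2); last ring.
  apply: H; try lra.
  - move=> t Ht; apply: is_derive_Rpower; lra.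
  - move=> t Ht; apply: is_derive_scal_Rpower; lra.
  - move=> t Ht; rewrite Rabs_mult Rabs_pos_eq; last nra.
    rewrite Rabs_pos_eq; last exact: Rlt_le (Rpower_gt_0 _ _).
    rewrite (_ : - b * (- b - 1) = b * (b + 1)); last ring.
    apply: Rmult_le_compat_l; first nra.
    apply: Rle_trans (Rpower_neg_le_half t (- b - 1 - 1) Ht ltac:(lra)) _.
    by right; congr Rpower; ring.
Qed.

Definition is_RInt_0_oo (f : R -> R) (l : R) : Prop :=
  is_RInt_gen f (at_right 0) (Rbar_locally p_infty) l.

Lemma ball_0_iff (e : posreal) (v : R) : ball 0 e v <-> Rabs v < e.
Proof. by rewrite /ball /= /AbsRing_ball /abs /minus /plus /opp /= Ropp_0 Rplus_0_r. Qed.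

Lemma at_right_0_below c : 0 < c -> at_right 0 (fun a => 0 < a < c).
Proof.
  move=> Hc; exists (mkposreal c Hc) => y /ball_0_iff Hy Hy0; split => //.
  have := Rle_abs y; rewrite /= in Hy; lra.
Qed.

Lemma eventually_positive_segment (P : R -> Prop) : (forall y, 0 < y -> P y) ->
  filter_prod (at_right 0) (Rbar_locally p_infty)
    (fun ab => fst ab < snd ab /\
       forall z, Rmin (fst ab) (snd ab) <= z <= Rmax (fst ab) (snd ab) -> P z).
Proof.
  move=> HP; apply: (Filter_prod _ _ _ (fun a => 0 < a < 1) (fun b => 1 < b)).
  - exact: at_right_0_below Rlt_0_1.
  - by exists 1.
  - move=> a b Ha Hb /=; split; first lra.
    move=> z [Hz _]; apply: HP; apply: Rlt_le_trans Hz; rewrite /Rmin.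
    by case: Rle_dec; lra.
Qed.

Lemma is_RInt_0_oo_ext (f g : R -> R) l :
  (forall y, 0 < y -> f y = g y) -> is_RInt_0_oo f l -> is_RInt_0_oo g l.
Proof.
  move=> Hfg; apply: is_RInt_gen_ext.
  apply: filter_imp (eventually_positive_segment _ Hfg) => ab [_ H] z Hz.
  apply: H; lra.
Qed.

Lemma is_RInt_0_oo_plus (f g : R -> R) lf lg : is_RInt_0_oo f lf -> is_RInt_0_oo g lg ->
  is_RInt_0_oo (fun y => f y + g y) (lf + lg).
Proof. move=> Hf Hg; exact: is_RInt_gen_plus Hf Hg. Qed.

Lemma is_RInt_0_oo_minus (f g : R -> R) lf lg : is_RInt_0_oo f lf -> is_RInt_0_oo g lg ->
  is_RInt_0_oo (fun y => f y - g y) (lf - lg).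
Proof. move=> Hf Hg; exact: is_RInt_gen_minus Hf Hg. Qed.

Lemma is_RInt_0_oo_scal (f : R -> R) c lf : is_RInt_0_oo f lf ->
  is_RInt_0_oo (fun y => c * f y) (c * lf).
Proof. move=> Hf; exact: is_RInt_gen_scal Hf. Qed.

Lemma is_RInt_0_oo_norm (f g : R -> R) lf lg :
  (forall y, 0 < y -> Rabs (f y) <= g y) ->
  is_RInt_0_oo f lf -> is_RInt_0_oo g lg -> Rabs lf <= lg.
Proof.
  move=> Hb Hf Hg.
  apply: (RInt_gen_norm f g lf lg _ _ Hf Hg).
  - apply: filter_imp (eventually_positive_segment _ (fun _ _ => I)) => ab [H _]; lra.
  - apply: filter_imp (eventually_positive_segment _ Hb) => ab [H1 H2] z Hz.
    apply: H2; rewrite /Rmin /Rmax; case: Rle_dec; lra.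
Qed.

Lemma monotone_bounded_limit (F : R -> R) (c K : R) :
  (forall b b', c <= b <= b' -> F b <= F b') ->
  (forall b, c <= b -> F b <= K) ->
  exists L, (forall b, c <= b -> F b <= L) /\
    forall eps, 0 < eps -> exists B, c <= B /\ forall b, B <= b -> L - eps < F b.
Proof.
  move=> Hm Hb.
  set E := fun r => exists b, c <= b /\ r = F b.
  have HE1 : bound E by exists K => r [b [Hb1 ->]]; exact: Hb.
  have HE2 : exists r, E r by exists (F c), c; split; [lra | done].
  have [L [HL1 HL2]] := completeness E HE1 HE2.
  exists L; split; first by move=> b Hb'; apply: HL1; exists b.
  move=> eps Heps; apply: NNPP => Hn.
  have : is_upper_bound E (L - eps).
  { move=> r [b [Hb1 ->]]; case: (Rle_dec (F b) (L - eps)) => // Hf.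
    exfalso; apply: Hn; exists b; split => // b' Hb'.
    have := Hm b b' ltac:(lra); lra. }
  move/HL2; lra.
Qed.

Lemma is_RInt_gen_to_pinfty (f : R -> R) c L :
  (forall b, c <= b -> ex_RInt f c b) ->
  (forall eps, 0 < eps -> exists B, c <= B /\ forall b, B <= b -> Rabs (RInt f c b - L) < eps) ->
  is_RInt_gen f (at_point c) (Rbar_locally p_infty) L.
Proof.
  move=> Hex Hlim.
  apply: (filterlimi_lim_ext_loc (fun ab => RInt f (fst ab) (snd ab))).
  - apply: (Filter_prod _ _ _ (fun a => a = c) (fun b => c < b)) => //; first by exists c.
    move=> a b -> Hb /=; apply: (RInt_correct (V := R_CompleteNormedModule)).
    apply: Hex; lra.
  - apply/filterlim_locally => eps.
    have [B [HB1 HB2]] := Hlim eps (cond_pos eps).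
    apply: (Filter_prod _ _ _ (fun a => a = c) (fun b => B < b)) => //; first by exists B.
    move=> a b -> Hb; apply (HB2 b); simpl; lra.
Qed.

Lemma is_RInt_gen_from_0 (f : R -> R) c L : 0 < c ->
  (forall a, 0 < a <= c -> ex_RInt f a c) ->
  (forall eps, 0 < eps -> exists B, 0 < B /\ forall a, 0 < a <= B -> Rabs (RInt f a c - L) < eps) ->
  is_RInt_gen f (at_right 0) (at_point c) L.
Proof.
  move=> Hc Hex Hlim.
  apply: (filterlimi_lim_ext_loc (fun ab => RInt f (fst ab) (snd ab))).
  - apply: (Filter_prod _ _ _ (fun a => 0 < a < c) (fun b => b = c)) => //.
    + exact: at_right_0_below.
    + move=> a b Ha -> /=; apply: (RInt_correct (V := R_CompleteNormedModule)).
      apply: Hex; lra.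
  - apply/filterlim_locally => eps.
    have [B [HB1 HB2]] := Hlim eps (cond_pos eps).
    apply: (Filter_prod _ _ _ (fun a => 0 < a < B) (fun b => b = c)) => //.
    + exact: at_right_0_below.
    + move=> a b Ha ->; apply (HB2 a); simpl; lra.
Qed.

(** * The Gamma integral *)

Definition gamma_integrand (x y : R) : R := Rpower y (x - 1) * exp (- y).

Lemma gamma_integrand_pos x y : 0 < gamma_integrand x y.
Proof. apply: Rmult_lt_0_compat; [exact: Rpower_gt_0 | exact: exp_pos]. Qed.

Lemma continuous_gamma_integrand x y : 0 < y -> continuous (gamma_integrand x) y.
Proof.
  move=> Hy; apply: (continuous_mult (fun z => Rpower z (x - 1)) (fun z => exp (- z))).
  - exact: continuous_Rpower.
  - apply: ex_derive_continuous; auto_derive; done.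
Qed.

Lemma ex_RInt_gamma_integrand x a b : 0 < a -> 0 < b -> ex_RInt (gamma_integrand x) a b.
Proof.
  move=> Ha Hb; apply: ex_RInt_continuous => z [Hz _].
  apply: continuous_gamma_integrand; apply: Rlt_le_trans Hz.
  by rewrite /Rmin; case: Rle_dec.
Qed.

Lemma RInt_gamma_integrand_ge0 x a b : 0 < a <= b -> 0 <= RInt (gamma_integrand x) a b.
Proof.
  move=> H; apply: RInt_ge_0; first lra.
  - apply: ex_RInt_gamma_integrand; lra.
  - by move=> y _; apply: Rlt_le; exact: gamma_integrand_pos.
Qed.

Lemma RInt_gamma_integrand_Chasles x a b c : 0 < a -> 0 < b -> 0 < c ->
  RInt (gamma_integrand x) a b + RInt (gamma_integrand x) b c = RInt (gamma_integrand x) a c.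
Proof.
  move=> Ha Hb Hc.
  exact: (RInt_Chasles (V := R_CompleteNormedModule) _ a b c
            (ex_RInt_gamma_integrand x a b Ha Hb) (ex_RInt_gamma_integrand x b c Hb Hc)).
Qed.

(* y^n <= n! e^y for y >= 0, from the exponential series. *)
Lemma pow_le_fact_exp y n : 0 <= y -> y ^ n <= INR (Factorial.fact n) * exp y.
Proof.
  move=> Hy; have Hf := INR_fact_lt_0 n.
  have Hterm : y ^ n / INR (Factorial.fact n)
             <= sum_f_R0 (fun k => y ^ k / INR (Factorial.fact k)) n.
  { case: n Hf => [|n] Hf; first by rewrite /=; lra.
    rewrite tech5.
    have : 0 <= sum_f_R0 (fun k => y ^ k / INR (Factorial.fact k)) n.
    { apply: cond_pos_sum => k; apply: Rdiv_le_0_compat; [exact: pow_le | exact: INR_fact_lt_0]. }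
    lra. }
  have Htaylor := exp_ge_taylor y n Hy.
  apply: (Rmult_le_reg_r (/ INR (Factorial.fact n))); first exact: Rinv_0_lt_compat.
  rewrite (_ : INR (Factorial.fact n) * exp y * / INR (Factorial.fact n) = exp y); last by field; lra.
  rewrite /Rdiv in Hterm; lra.
Qed.

Lemma gamma_integrand_decay x :
  exists K, 0 < K /\ forall y, 1 <= y -> gamma_integrand x y <= K / y ^ 2.
Proof.
  have [N HN] := INR_unbounded (x - 1).
  exists (INR (Factorial.fact (N + 2))); split; first exact: INR_fact_lt_0.
  move=> y Hy; rewrite /gamma_integrand exp_Ropp.
  have Hpow : Rpower y (x - 1) <= y ^ N by rewrite -Rpower_pow; [apply: Rle_Rpower | ]; lra.
  have Hexp := pow_le_fact_exp y (N + 2) ltac:(lra); rewrite pow_add in Hexp.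
  have Hy2 : 0 < y ^ 2 by apply: pow_lt; lra.
  have HyN : 0 < y ^ N by apply: pow_lt; lra.
  have He := exp_pos y.
  apply: Rle_trans (_ : y ^ N * / exp y <= _).
  - by apply: Rmult_le_compat_r; [apply: Rlt_le; exact: Rinv_0_lt_compat | ].
  - apply: (Rmult_le_reg_r (exp y * y ^ 2)); first nra.
    rewrite (_ : y ^ N * / exp y * (exp y * y ^ 2) = y ^ N * y ^ 2); last by field; lra.
    rewrite (_ : INR (Factorial.fact (N + 2)) / y ^ 2 * (exp y * y ^ 2)
               = INR (Factorial.fact (N + 2)) * exp y); last by field; lra.
    exact: Hexp.
Qed.

Lemma is_RInt_inv_sq K b : 1 <= b -> is_RInt (fun y => K / y ^ 2) 1 b (K - K / b).
Proof.
  move=> Hb.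
  have Hpos : forall y, Rmin 1 b <= y -> 0 < y
    by move=> y Hy; apply: Rlt_le_trans Hy; rewrite /Rmin; case: Rle_dec; lra.
  have -> : K - K / b = minus (- K / b) (- K / 1) by rewrite /minus /plus /opp /=; field; lra.
  apply: (is_RInt_derive (V := R_CompleteNormedModule) (fun y => - K / y)).
  - move=> y [Hy _]; have := Hpos y Hy => ?.
    auto_derive; first lra.
    by rewrite /=; field; lra.
  - move=> y [Hy _]; have := Hpos y Hy => ?.
    apply: ex_derive_continuous; auto_derive; nra.
Qed.

Lemma is_RInt_Rpower_0_1 x a : 0 < x -> 0 < a <= 1 ->
  is_RInt (fun y => Rpower y (x - 1)) a 1 ((1 - Rpower a x) / x).
Proof.
  move=> Hx Ha.
  have Hpos : forall y, Rmin a 1 <= y -> 0 < y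
    by move=> y Hy; apply: Rlt_le_trans Hy; rewrite /Rmin; case: Rle_dec; lra.
  have -> : (1 - Rpower a x) / x = minus (/ x * Rpower 1 x) (/ x * Rpower a x)
    by rewrite Rpower_1_base /minus /plus /opp /=; field; lra.
  apply: (is_RInt_derive (V := R_CompleteNormedModule) (fun y => / x * Rpower y x)).
  - move=> y [Hy _]; have := Hpos y Hy => ?.
    rewrite (_ : Rpower y (x - 1) = / x * (x * Rpower y (x - 1))); last by field; lra.
    apply: is_derive_scal; exact: is_derive_Rpower.
  - move=> y [Hy _]; exact: continuous_Rpower (Hpos y Hy).
Qed.

(* The integral over [1, oo) converges, by monotonicity and the y^-2 decay. *)
Lemma gamma_integral_tail x : exists L,
  is_RInt_gen (gamma_integrand x) (at_point 1) (Rbar_locally p_infty) L /\ 0 < L.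
Proof.
  have [K [HK HKb]] := gamma_integrand_decay x.
  have [L [HLa HLb]] : exists L, (forall b, 1 <= b -> RInt (gamma_integrand x) 1 b <= L) /\
      forall eps, 0 < eps -> exists B, 1 <= B /\
        forall b, B <= b -> L - eps < RInt (gamma_integrand x) 1 b.
  { apply: (monotone_bounded_limit _ 1 K).
    - move=> b b' Hb; rewrite -(RInt_gamma_integrand_Chasles x 1 b b'); try lra.
      have := RInt_gamma_integrand_ge0 x b b' ltac:(lra); lra.
    - move=> b Hb; apply: Rle_trans (_ : RInt (fun y => K / y ^ 2) 1 b <= _).
      + apply: RInt_le => //; first by apply: ex_RInt_gamma_integrand; lra.
        * by eexists; apply: is_RInt_inv_sq.
        * move=> y Hy; apply: HKb; lra.
      + rewrite (is_RInt_unique _ _ _ _ (is_RInt_inv_sq K b Hb)).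
        have : 0 < K / b by apply: Rdiv_lt_0_compat; lra.
        lra. }
  exists L; split.
  - apply: is_RInt_gen_to_pinfty => [b Hb|eps Heps].
    + apply: ex_RInt_gamma_integrand; lra.
    + have [B [HB1 HB2]] := HLb eps Heps; exists B; split => // b Hb.
      have := HB2 b Hb; have := HLa b ltac:(lra).
      move=> ? ?; rewrite Rabs_left1; lra.
  - have := HLa 2 ltac:(lra).
    have : 0 < RInt (gamma_integrand x) 1 2.
    { apply: RInt_gt_0; first lra.
      - by move=> y _; exact: gamma_integrand_pos.
      - move=> y Hy; apply: continuous_gamma_integrand; lra. }
    lra.
Qed.

(* The integral over (0, 1] converges for x > 0, since y^(x-1) is integrable. *)
Lemma gamma_integral_head x : 0 < x -> exists L,
  is_RInt_gen (gamma_integrand x) (at_right 0) (at_point 1) L /\ 0 <= L.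
Proof.
  move=> Hx.
  have [L [HLa HLb]] : exists L, (forall t, 1 <= t -> RInt (gamma_integrand x) (/ t) 1 <= L) /\
      forall eps, 0 < eps -> exists B, 1 <= B /\
        forall t, B <= t -> L - eps < RInt (gamma_integrand x) (/ t) 1.
  { apply: (monotone_bounded_limit _ 1 (/ x)).
    - move=> t t' Ht.
      have : 0 < / t' by apply: Rinv_0_lt_compat; lra.
      have : / t' <= / t by apply: Rinv_le_contravar; lra.
      move=> ? ?; rewrite -(RInt_gamma_integrand_Chasles x (/ t') (/ t) 1); try lra.
      have := RInt_gamma_integrand_ge0 x (/ t') (/ t) ltac:(lra); lra.
    - move=> t Ht.
      have Ht0 : 0 < / t by apply: Rinv_0_lt_compat; lra.
      have Ht1 : / t <= 1 by rewrite -Rinv_1; apply: Rinv_le_contravar; lra.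
      apply: Rle_trans (_ : RInt (fun y => Rpower y (x - 1)) (/ t) 1 <= _).
      + apply: RInt_le => //; first by apply: ex_RInt_gamma_integrand; lra.
        * by eexists; apply: is_RInt_Rpower_0_1.
        * move=> y Hy; rewrite /gamma_integrand.
          have := Rpower_gt_0 y (x - 1).
          have : exp (- y) <= 1 by rewrite -exp_0; apply: Rlt_le; apply: exp_increasing; lra.
          move=> ? ?; nra.
      + rewrite (is_RInt_unique _ _ _ _ (is_RInt_Rpower_0_1 x (/ t) Hx ltac:(lra))).
        have := Rpower_gt_0 (/ t) x; have : 0 < / x by apply: Rinv_0_lt_compat.
        rewrite /Rdiv; move=> ? ?; nra. }
  exists L; split.
  - apply: is_RInt_gen_from_0 => [|a Ha|eps Heps]; first lra.
    + apply: ex_RInt_gamma_integrand; lra.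
    + have [B [HB1 HB2]] := HLb eps Heps.
      exists (/ B); split; first by apply: Rinv_0_lt_compat; lra.
      move=> a Ha.
      have HBa : B <= / a by rewrite -(Rinv_inv B); apply: Rinv_le_contravar; lra.
      have := HB2 (/ a) HBa; have := HLa (/ a) ltac:(lra); rewrite Rinv_inv.
      move=> ? ?; rewrite Rabs_left1; lra.
  - by have := HLa 1 ltac:(lra); rewrite Rinv_1 RInt_point.
Qed.

Lemma Gamma_spec x : 0 < x -> is_RInt_0_oo (gamma_integrand x) (Gamma x) /\ 0 < Gamma x.
Proof.
  move=> Hx.
  have [L1 [H1 HL1]] := gamma_integral_head x Hx.
  have [L2 [H2 HL2]] := gamma_integral_tail x.
  have H : is_RInt_gen (gamma_integrand x) (at_right 0) (Rbar_locally p_infty) (plus L1 L2)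
    by apply: is_RInt_gen_Chasles H1 H2.
  have HG : Gamma x = plus L1 L2.
  { rewrite /Gamma; apply (is_RInt_gen_unique (V := R_CompleteNormedModule)); exact H. }
  rewrite HG; split => //; rewrite /plus /=; lra.
Qed.

(** * The functional equation and the polynomial moments of Gamma *)

Lemma is_RInt_0_oo_unique (f : R -> R) l l' :
  is_RInt_0_oo f l -> is_RInt_0_oo f l' -> l = l'.
Proof.
  move=> H H'.
  by rewrite -(is_RInt_gen_unique (V := R_CompleteNormedModule) _ _ H)
             -(is_RInt_gen_unique (V := R_CompleteNormedModule) _ _ H').
Qed.

(* -y^x e^(-y) is a primitive of gamma_integrand (x+1) - x gamma_integrand x:
   this is the integration by parts behind Gamma(x+1) = x Gamma(x). *)
Definition gamma_ibp (x y : R) : R := - (Rpower y x * exp (- y)).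

Definition gamma_ibp_deriv (x y : R) : R := gamma_integrand (x + 1) y - x * gamma_integrand x y.

Lemma is_derive_gamma_ibp x y : 0 < y -> is_derive (gamma_ibp x) y (gamma_ibp_deriv x y).
Proof.
  move=> Hy; rewrite /gamma_ibp /gamma_ibp_deriv /gamma_integrand (_ : x + 1 - 1 = x); last ring.
  have Hexp : is_derive (fun z => exp (- z)) y (- exp (- y)) by auto_derive; [done | ring].
  have H := is_derive_opp _ _ _
    (is_derive_mult _ _ _ _ _ (is_derive_Rpower x y Hy) Hexp (fun n m => Rmult_comm n m)).
  rewrite (_ : Rpower y x * exp (- y) - x * (Rpower y (x - 1) * exp (- y))
             = opp (plus (mult (x * Rpower y (x - 1)) (exp (- y)))
                         (mult (Rpower y x) (- exp (- y))))); first exact: H.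
  rewrite /opp /plus /mult /=; ring.
Qed.

Lemma continuous_gamma_ibp_deriv x y : 0 < y -> continuous (gamma_ibp_deriv x) y.
Proof.
  move=> Hy.
  apply: (continuous_plus (gamma_integrand (x + 1)) (fun z => opp (x * gamma_integrand x z))).
  - exact: continuous_gamma_integrand.
  - apply: (continuous_opp (fun z => x * gamma_integrand x z)).
    apply: (continuous_scal_r x (gamma_integrand x)); exact: continuous_gamma_integrand.
Qed.

Lemma gamma_ibp_lim_0 x : 0 < x -> filterlim (gamma_ibp x) (at_right 0) (locally 0).
Proof.
  move=> Hx; apply/filterlim_locally => eps.
  exists (mkposreal _ (Rpower_gt_0 eps (/ x))) => y /ball_0_iff Hy Hy0.
  rewrite Rabs_pos_eq /= in Hy; last lra.
  apply/ball_0_iff; rewrite /gamma_ibp Rabs_Ropp Rabs_pos_eq; last by apply: Rmult_le_pos;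
    apply: Rlt_le; [exact: Rpower_gt_0 | exact: exp_pos].
  have Hyx : Rpower y x < eps.
  { rewrite -[X in _ < X](Rpower_1 eps (cond_pos eps)).
    rewrite -(Rinv_l x); last lra.
    rewrite -Rpower_mult; apply: Rlt_Rpower_l => //; lra. }
  have : exp (- y) <= 1 by rewrite -exp_0; apply: Rlt_le; apply: exp_increasing; lra.
  have := Rpower_gt_0 y x; move=> ? ?; nra.
Qed.

Lemma gamma_ibp_lim_pinfty x : filterlim (gamma_ibp x) (Rbar_locally p_infty) (locally 0).
Proof.
  have [K [HK HKb]] := gamma_integrand_decay (x + 1).
  apply/filterlim_locally => eps; have He := cond_pos eps.
  exists (Rmax 1 (K / eps)) => y Hy.
  have Hy1 : 1 < y by have := Rmax_l 1 (K / eps); lra.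
  have HyK : K / eps < y by have := Rmax_r 1 (K / eps); lra.
  have := HKb y ltac:(lra); rewrite /gamma_integrand (_ : x + 1 - 1 = x); last ring.
  move=> HW; apply/ball_0_iff.
  rewrite /gamma_ibp Rabs_Ropp Rabs_pos_eq; last by apply: Rmult_le_pos;
    apply: Rlt_le; [exact: Rpower_gt_0 | exact: exp_pos].
  apply: Rle_lt_trans HW _.
  have HKe : K < eps * y by move: HyK; rewrite /Rdiv => H;
    apply: (Rmult_lt_reg_r (/ eps)); [exact: Rinv_0_lt_compat | rewrite (Rmult_comm eps) Rmult_assoc Rinv_r; lra].
  apply: (Rmult_lt_reg_r (y ^ 2)); first by apply: pow_lt; lra.
  rewrite (_ : K / y ^ 2 * y ^ 2 = K); last by field; lra.
  rewrite /=; nra.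
Qed.

Lemma Gamma_succ x : 0 < x -> Gamma (x + 1) = x * Gamma x.
Proof.
  move=> Hx.
  have [G0 _] := Gamma_spec x Hx.
  have [G1 _] := Gamma_spec (x + 1) ltac:(lra).
  (* the integral of the derivative of gamma_ibp is its variation, 0 - 0 *)
  have HD : is_RInt_0_oo (Derive (gamma_ibp x)) (0 - 0).
  { apply: is_RInt_gen_Derive.
    - apply: filter_imp (eventually_positive_segment _ (fun y Hy =>
        ex_intro _ _ (is_derive_gamma_ibp x y Hy))) => ab [_ H]; exact: H.
    - have Hcont : forall y, 0 < y -> continuous (Derive (gamma_ibp x)) y.
      { move=> y Hy; apply: (continuous_ext_loc _ (gamma_ibp_deriv x)).
        + apply: (locally_interval _ y 0 p_infty) => // z Hz _.
          symmetry; apply: is_derive_unique; exact: is_derive_gamma_ibp.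
        + exact: continuous_gamma_ibp_deriv. }
      apply: filter_imp (eventually_positive_segment _ Hcont) => ab [_ H]; exact: H.
    - exact: gamma_ibp_lim_0.
    - exact: gamma_ibp_lim_pinfty. }
  have HD' : is_RInt_0_oo (gamma_ibp_deriv x) 0.
  { rewrite (_ : 0 = 0 - 0); last ring.
    apply: is_RInt_0_oo_ext HD => y Hy; apply: is_derive_unique; exact: is_derive_gamma_ibp. }
  have HG := is_RInt_0_oo_minus _ _ _ _ G1 (is_RInt_0_oo_scal _ x _ G0).
  have := is_RInt_0_oo_unique _ _ _ HD' HG; lra.
Qed.

Fixpoint poch (x : R) (k : nat) : R :=
  match k with O => 1 | S k => poch x k * (x + INR k) end.

Lemma Gamma_poch x k : 0 < x -> Gamma (x + INR k) = Gamma x * poch x k.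
Proof.
  move=> Hx; elim: k => [|k IH]; first by rewrite /= Rplus_0_r; ring.
  rewrite S_INR /= (_ : x + (INR k + 1) = x + INR k + 1); last ring.
  by rewrite Gamma_succ ?IH; [ring | have := pos_INR k; lra].
Qed.

Lemma gamma_integrand_shift x p y : 0 < y ->
  gamma_integrand (x + p) y = Rpower y p * gamma_integrand x y.
Proof.
  move=> Hy; rewrite /gamma_integrand (_ : x + p - 1 = p + (x - 1)); last ring.
  by rewrite Rpower_plus; ring.
Qed.

Lemma gamma_moment x k : 0 < x ->
  is_RInt_0_oo (fun y => y ^ k * gamma_integrand x y) (Gamma x * poch x k).
Proof.
  move=> Hx; rewrite -Gamma_poch //.
  have [H _] := Gamma_spec (x + INR k) ltac:(have := pos_INR k; lra).
  apply: is_RInt_0_oo_ext H => y Hy.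
  by rewrite gamma_integrand_shift // Rpower_pow.
Qed.

Lemma gamma_moment_poly4 x c0 c1 c2 c3 c4 : 0 < x ->
  is_RInt_0_oo (fun y => (c0 + c1 * y + c2 * y ^ 2 + c3 * y ^ 3 + c4 * y ^ 4) * gamma_integrand x y)
    (Gamma x * (c0 + c1 * x + c2 * (x * (x + 1)) + c3 * (x * (x + 1) * (x + 2))
       + c4 * (x * (x + 1) * (x + 2) * (x + 3)))).
Proof.
  move=> Hx.
  have Hk := fun c k => is_RInt_0_oo_scal _ c _ (gamma_moment x k Hx).
  have H := is_RInt_0_oo_plus _ _ _ _ (is_RInt_0_oo_plus _ _ _ _
    (is_RInt_0_oo_plus _ _ _ _ (is_RInt_0_oo_plus _ _ _ _ (Hk c0 0%nat) (Hk c1 1%nat))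
       (Hk c2 2%nat)) (Hk c3 3%nat)) (Hk c4 4%nat).
  set l := (X in is_RInt_0_oo _ X) in H.
  have -> : Gamma x * (c0 + c1 * x + c2 * (x * (x + 1)) + c3 * (x * (x + 1) * (x + 2))
       + c4 * (x * (x + 1) * (x + 2) * (x + 3))) = l by rewrite /l /=; ring.
  by apply: is_RInt_0_oo_ext H => y _; rewrite /=; ring.
Qed.

Lemma gamma_central_moment_poly4 x c0 c1 c2 c3 c4 : 0 < x ->
  is_RInt_0_oo (fun y => (c0 + c1 * (y / x - 1) + c2 * (y / x - 1) ^ 2 + c3 * (y / x - 1) ^ 3
                          + c4 * (y / x - 1) ^ 4) * gamma_integrand x y)
    (Gamma x * (c0 + c2 / x + c3 * 2 / x ^ 2 + c4 * (3 * x + 6) / x ^ 3)).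
Proof.
  move=> Hx.
  have H := gamma_moment_poly4 x (c0 - c1 + c2 - c3 + c4) ((c1 - 2 * c2 + 3 * c3 - 4 * c4) / x)
    ((c2 - 3 * c3 + 6 * c4) / x ^ 2) ((c3 - 4 * c4) / x ^ 3) (c4 / x ^ 4) Hx.
  set l := (X in is_RInt_0_oo _ X) in H.
  have -> : Gamma x * (c0 + c2 / x + c3 * 2 / x ^ 2 + c4 * (3 * x + 6) / x ^ 3) = l
    by rewrite /l; field; lra.
  by apply: is_RInt_0_oo_ext H => y _; field; lra.
Qed.

Lemma Gamma_ratio_taylor_bound x a e : 0 < x -> 0 < a <= 1 -> 0 < e ->
  Rabs (Gamma (x + a) - Gamma x * Rpower x a * (1 + a * (a - 1) / (2 * x)))
  <= Gamma x * Rpower x a * (8 * (e / x + (3 * x + 6) / x ^ 3 / e)).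
Proof.
  move=> Hx Ha He; set xa := Rpower x a; have Hxa : 0 < xa by exact: Rpower_gt_0.
  have Hmain : is_RInt_0_oo
      (fun y => Rpower y a * gamma_integrand x y
         - (xa + xa * a * (y / x - 1) + xa * (a * (a - 1) / 2) * (y / x - 1) ^ 2
            + 0 * (y / x - 1) ^ 3 + 0 * (y / x - 1) ^ 4) * gamma_integrand x y)
      (Gamma (x + a) - Gamma x * (xa + xa * (a * (a - 1) / 2) / x + 0 * 2 / x ^ 2
         + 0 * (3 * x + 6) / x ^ 3)).
  { apply: is_RInt_0_oo_minus; last exact: gamma_central_moment_poly4.
    have [G _] := Gamma_spec (x + a) ltac:(lra).
    by apply: is_RInt_0_oo_ext G => y Hy; rewrite gamma_integrand_shift. }
  have Herr := gamma_central_moment_poly4 x 0 0 (8 * xa * e) 0 (8 * xa / e) Hx.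
  have Hn := is_RInt_0_oo_norm _ _ _ _ _ Hmain Herr.
  rewrite (_ : Gamma x * xa * (1 + a * (a - 1) / (2 * x))
             = Gamma x * (xa + xa * (a * (a - 1) / 2) / x + 0 * 2 / x ^ 2 + 0 * (3 * x + 6) / x ^ 3));
    last by field; lra.
  apply: Rle_trans (Hn _) _.
  - move=> y Hy; rewrite -Rmult_minus_distr_r Rabs_mult (Rabs_pos_eq (gamma_integrand x y));
      last exact: Rlt_le (gamma_integrand_pos _ _).
    apply: Rmult_le_compat_r; first exact: Rlt_le (gamma_integrand_pos _ _).
    have Hb := Rpower_taylor_scaled a x y e Ha Hx Hy He; rewrite -/xa in Hb.
    rewrite (_ : xa + xa * a * (y / x - 1) + xa * (a * (a - 1) / 2) * (y / x - 1) ^ 2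
                 + 0 * (y / x - 1) ^ 3 + 0 * (y / x - 1) ^ 4
               = xa * (1 + a * (y / x - 1) + a * (a - 1) / 2 * (y / x - 1) ^ 2)); last ring.
    rewrite (_ : 0 + 0 * (y / x - 1) + 8 * xa * e * (y / x - 1) ^ 2 + 0 * (y / x - 1) ^ 3
                 + 8 * xa / e * (y / x - 1) ^ 4
               = xa * (8 * (e * (y / x - 1) ^ 2 + (y / x - 1) ^ 4 / e))); [exact: Hb | field; lra].
  - by right; field; lra.
Qed.

(* Uniform expansion of the Gamma ratio, choosing e = x^(-1/2):
   Gamma(x+a) = Gamma(x) x^a (1 + a(a-1)/(2x)) + O(Gamma(x) x^(a-3/2)). *)
Lemma Gamma_ratio_expansion x a : /2 <= x -> 0 < a <= 1 ->
  Rabs (Gamma (x + a) - Gamma x * Rpower x a * (1 + a * (a - 1) / (2 * x)))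
  <= 128 * Gamma x * Rpower x (a - 3/2).
Proof.
  move=> Hx Ha; have Hx0 : 0 < x by lra.
  have HG : 0 < Gamma x by case: (Gamma_spec x Hx0).
  set r := Rpower x (/2); have Hr : 0 < r by exact: Rpower_gt_0.
  have Hrr : r * r = x by exact: Rpower_half_sq.
  set P := Rpower x (a - 3/2); have HP : 0 < P by exact: Rpower_gt_0.
  have HxA : Rpower x a = P * r ^ 3
    by rewrite /P /r -Rpower_half_shift //; congr Rpower; rewrite /=; field.
  apply: Rle_trans (Gamma_ratio_taylor_bound x a (/ r) Hx0 Ha ltac:(exact: Rinv_0_lt_compat)) _.
  rewrite (_ : Gamma x * Rpower x a * _ = 8 * P * Gamma x * (4 + 6 / x)); last first.
  { rewrite HxA -Hrr; field; lra. }
  have : 6 / x <= 12.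
  { apply: (Rmult_le_reg_r x) => //; rewrite (_ : 6 / x * x = 6); [lra | field; lra]. }
  rewrite (_ : 128 * Gamma x * P = 8 * P * Gamma x * 16); last ring.
  move=> H6; apply: Rmult_le_compat_l; [nra | lra].
Qed.

(** * Binomial expectations and central moments *)

Lemma h_nonneg q d t : 0 <= q <= 1 -> 0 <= h q d t.
Proof.
  move=> Hq; rewrite /h; apply: Rmult_le_pos; first apply: Rmult_le_pos.
  - rewrite /Binomial.C /Rdiv; apply: Rmult_le_pos; first exact: Rlt_le (INR_fact_lt_0 _).
    apply: Rlt_le; apply: Rinv_0_lt_compat; apply: Rmult_lt_0_compat; exact: INR_fact_lt_0.
  - apply: pow_le; lra.
  - apply: pow_le; lra.
Qed.

(* Pascal's rule for the binomial weights: condition on the last trial. *)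
Lemma h_succ q d t : (t < d)%nat -> h q (S d) (S t) = q * h q d t + (1 - q) * h q d (S t).
Proof.
  move=> Ht; rewrite /h -pascal //.
  have -> : (S d - S t)%nat = S (d - S t) by lia.
  have -> : (d - t)%nat = S (d - S t) by lia.
  rewrite /=; ring.
Qed.

Lemma h_succ_0 q d : h q (S d) 0 = (1 - q) * h q d 0.
Proof. by rewrite /h !C_n_0 !Nat.sub_0_r /=; ring. Qed.

Lemma h_succ_top q d : h q (S d) (S d) = q * h q d d.
Proof. by rewrite /h !C_n_n !Nat.sub_diag /=; ring. Qed.

Definition bin_expect (q : R) (d : nat) (f : nat -> R) : R := sum_f_R0 (fun t => h q d t * f t) d.

Lemma bin_expect_0 q f : bin_expect q 0 f = f 0%nat.
Proof. by rewrite /bin_expect /h /= C_n_0; ring. Qed.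

Lemma bin_expect_succ q d f :
  bin_expect q (S d) f = q * bin_expect q d (fun t => f (S t)) + (1 - q) * bin_expect q d f.
Proof.
  rewrite /bin_expect decomp_sum /=; last lia.
  rewrite h_succ_0; case: d => [|d]; first by rewrite /= h_succ_top; ring.
  rewrite tech5 h_succ_top.
  rewrite (sum_eq (fun i => h q (S (S d)) (S i) * f (S i))
                  (fun i => h q (S d) i * f (S i) * q + h q (S d) (S i) * f (S i) * (1 - q)));
    last by move=> i Hi; rewrite h_succ; [ring | lia].
  rewrite plus_sum -!scal_sum.
  rewrite (tech5 (fun t => h q (S d) t * f (S t))).
  rewrite (decomp_sum (fun t => h q (S d) t * f t) (S d)) /=; [ring | lia].
Qed.

Lemma bin_expect_ext q d f g : (forall t, (t <= d)%nat -> f t = g t) ->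
  bin_expect q d f = bin_expect q d g.
Proof. by move=> H; apply: sum_eq => i Hi; rewrite H. Qed.

Lemma bin_expect_plus q d f g :
  bin_expect q d (fun t => f t + g t) = bin_expect q d f + bin_expect q d g.
Proof. by rewrite /bin_expect -plus_sum; apply: sum_eq => i _; ring. Qed.

Lemma bin_expect_scal q d c f : bin_expect q d (fun t => c * f t) = c * bin_expect q d f.
Proof. by rewrite /bin_expect scal_sum; apply: sum_eq => i _; ring. Qed.

Lemma bin_expect_minus q d f g :
  bin_expect q d (fun t => f t - g t) = bin_expect q d f - bin_expect q d g.
Proof.
  rewrite (bin_expect_ext q d _ (fun t => f t + (-1) * g t)); last by move=> t _; ring.
  by rewrite bin_expect_plus bin_expect_scal; ring.
Qed.

Lemma bin_expect_const q d c : bin_expect q d (fun _ => c) = c.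
Proof.
  elim: d => [|d IH]; first by rewrite bin_expect_0.
  by rewrite bin_expect_succ IH; ring.
Qed.

Lemma bin_expect_le q d f g : 0 <= q <= 1 -> (forall t, (t <= d)%nat -> f t <= g t) ->
  bin_expect q d f <= bin_expect q d g.
Proof.
  move=> Hq H; apply: sum_Rle => n Hn.
  apply: Rmult_le_compat_l; [exact: h_nonneg | exact: H].
Qed.

Lemma bin_expect_abs q d f g : 0 <= q <= 1 -> (forall t, (t <= d)%nat -> Rabs (f t) <= g t) ->
  Rabs (bin_expect q d f) <= bin_expect q d g.
Proof.
  move=> Hq H; apply: Rabs_le; split.
  - rewrite (_ : - bin_expect q d g = bin_expect q d (fun t => -1 * g t)); last first.
    { by rewrite bin_expect_scal; ring. }
    apply: bin_expect_le => // t Ht; have := H t Ht; have := Rabs_Ropp (f t).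
    have := Rle_abs (- f t); lra.
  - apply: bin_expect_le => // t Ht; have := H t Ht; have := Rle_abs (f t); lra.
Qed.

Lemma bin_expect_poly4 q d (v : nat -> R) c0 c1 c2 c3 c4 :
  bin_expect q d (fun t => c0 + c1 * v t + c2 * v t ^ 2 + c3 * v t ^ 3 + c4 * v t ^ 4) =
  c0 + c1 * bin_expect q d v + c2 * bin_expect q d (fun t => v t ^ 2)
  + c3 * bin_expect q d (fun t => v t ^ 3) + c4 * bin_expect q d (fun t => v t ^ 4).
Proof. by rewrite !bin_expect_plus !bin_expect_scal bin_expect_const. Qed.

Definition centred (q : R) (d t : nat) : R := INR t - INR d * q.

Lemma bin_central_moments q d :
  bin_expect q d (centred q d) = 0 /\
  bin_expect q d (fun t => centred q d t ^ 2) = INR d * q * (1 - q) /\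
  bin_expect q d (fun t => centred q d t ^ 3) = INR d * q * (1 - q) * (1 - 2 * q) /\
  bin_expect q d (fun t => centred q d t ^ 4)
    = INR d * q * (1 - q) * (1 + 3 * (INR d - 2) * q * (1 - q)).
Proof.
  elim: d => [|d [M1 [M2 [M3 M4]]]].
  { by rewrite !bin_expect_0 /centred /=; repeat split; ring. }
  have Hstep : forall k, bin_expect q (S d) (fun t => centred q (S d) t ^ k) =
      q * bin_expect q d (fun t => (centred q d t + (1 - q)) ^ k)
      + (1 - q) * bin_expect q d (fun t => (centred q d t + - q) ^ k).
  { move=> k; rewrite bin_expect_succ.
    by congr (_ * _ + _ * _); apply: bin_expect_ext => t _; rewrite /centred !S_INR; congr pow; ring. }
  have Hexpand : forall c k, (k <= 4)%nat ->
      bin_expect q d (fun t => (centred q d t + c) ^ k) =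
      bin_expect q d (fun t => c ^ k + (INR k * c ^ (k - 1)) * centred q d t
          + (INR (k * (k - 1) / 2) * c ^ (k - 2)) * centred q d t ^ 2
          + (INR (k * (k - 1) * (k - 2) / 6) * c ^ (k - 3)) * centred q d t ^ 3
          + (if (k =? 4)%nat then 1 else 0) * centred q d t ^ 4).
  { move=> c k Hk; apply: bin_expect_ext => t _.
    by case: k Hk => [|[|[|[|[|k]]]]] Hk; rewrite /=; try ring; lia. }
  have Hmom : forall k, (k <= 4)%nat -> bin_expect q (S d) (fun t => centred q (S d) t ^ k) =
      q * (1 - q) ^ k + (1 - q) * (- q) ^ k
      + INR (k * (k - 1) / 2) * (q * (1 - q) ^ (k - 2) + (1 - q) * (- q) ^ (k - 2)) * (INR d * q * (1 - q))
      + INR (k * (k - 1) * (k - 2) / 6) * (q * (1 - q) ^ (k - 3) + (1 - q) * (- q) ^ (k - 3))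
          * (INR d * q * (1 - q) * (1 - 2 * q))
      + (if (k =? 4)%nat then 1 else 0) * (INR d * q * (1 - q) * (1 + 3 * (INR d - 2) * q * (1 - q))).
  { move=> k Hk; rewrite Hstep !Hexpand // !bin_expect_poly4 M1 M2 M3 M4; ring. }
  split; last split; last split.
  - rewrite (bin_expect_ext q (S d) _ (fun t => centred q (S d) t ^ 1)); last by move=> t _; ring.
    by rewrite Hmom /=; [ring | lia].
  - by rewrite Hmom ?S_INR /=; [ring | lia].
  - by rewrite Hmom ?S_INR /=; [ring | lia].
  - by rewrite Hmom ?S_INR /=; [ring | lia].
Qed.

(** * Expansion of the Gamma factor G_a around the binomial mean *)

Definition gamma_factor (a : R) (t : nat) : R :=
  if (t =? 0)%nat then 0 else Rpower 2 a * (Gamma (INR t / 2 + a) / Gamma (INR t / 2)).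

(* G_a(t) = t^a + a(a-1) t^(a-1) + O(t^(a-3/2)), from the Gamma ratio with x = t/2. *)
Lemma gamma_factor_expansion a t : 0 < a <= 1 -> (1 <= t)%nat ->
  Rabs (gamma_factor a t - Rpower (INR t) a - a * (a - 1) * Rpower (INR t) (a - 1))
  <= 512 * Rpower (INR t) (a - 3/2).
Proof.
  move=> Ha Ht; set tau := INR t.
  have Htau : 1 <= tau by rewrite /tau; apply: (le_INR 1).
  set x := tau / 2; have Hxt : tau = 2 * x by rewrite /x; field.
  have Hx0 : 0 < x by rewrite /x; lra.
  have Hb := Gamma_ratio_expansion x a ltac:(rewrite /x; lra) Ha.
  have HG : 0 < Gamma x by case: (Gamma_spec x ltac:(rewrite /x; lra)).
  have E1 : Rpower 2 a * Rpower x a = Rpower tau a by rewrite Hxt Rpower_mult_distr //; lra.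
  have E2 : Rpower tau (a - 1) = Rpower tau a / tau
    by rewrite (_ : a - 1 = a + - 1) ?Rpower_plus ?Rpower_Ropp ?Rpower_1 //; lra.
  have E3 : Rpower 2 a * Rpower x (a - 3/2) = Rpower 2 (3/2) * Rpower tau (a - 3/2).
  { rewrite Hxt -Rpower_mult_distr; try lra.
    by rewrite {1}(_ : a = 3/2 + (a - 3/2)) ?Rpower_plus; [ring | ring]. }
  have H2 := Rpower_2_le (3/2) 2 ltac:(simpl; lra).
  have := Rpower_gt_0 tau (a - 3/2); have := Rpower_gt_0 2 a => H2a Htau0.
  have -> : gamma_factor a t = Rpower 2 a * (Gamma (x + a) / Gamma x)
    by rewrite /gamma_factor; case: Nat.eqb_spec => [|_]; [lia | done].
  rewrite (_ : Rpower 2 a * (Gamma (x + a) / Gamma x) - Rpower tau a - a * (a - 1) * Rpower tau (a - 1)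
             = Rpower 2 a / Gamma x
               * (Gamma (x + a) - Gamma x * Rpower x a * (1 + a * (a - 1) / (2 * x))));
    last by rewrite E2 -E1 Hxt; field; split; lra.
  rewrite Rabs_mult Rabs_pos_eq; last by apply: Rdiv_le_0_compat; lra.
  apply: Rle_trans (Rmult_le_compat_l _ _ _ _ Hb) _; first by apply: Rdiv_le_0_compat; lra.
  rewrite (_ : Rpower 2 a / Gamma x * (128 * Gamma x * Rpower x (a - 3 / 2))
             = 128 * (Rpower 2 a * Rpower x (a - 3/2))); last by field; lra.
  rewrite E3 /=; nra.
Qed.

Section AroundTheMean.

(* Expansions around a centre m >= 1, written with P = m^(a-3/2) and
   r = m^(1/2), so that m^a = P r^3, m^(a-1) = P r and m^(a+1/2) = P r^4. *)
Variables (a m : R).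
Hypotheses (Ha : 0 < a <= 1) (Hm : 1 <= m).

Let P := Rpower m (a - 3/2).
Let r := Rpower m (/2).

Lemma sqrt_centre_sq : r * r = m.
Proof. apply: Rpower_half_sq; lra. Qed.

Lemma centre_power_shift k : Rpower m (a - 3/2 + INR k / 2) = P * r ^ k.
Proof. apply: Rpower_half_shift; lra. Qed.

Lemma centre_pow_a : Rpower m a = P * r ^ 3.
Proof. by rewrite -centre_power_shift; congr Rpower; rewrite /=; field. Qed.

Lemma centre_pow_a_1 : Rpower m (a - 1) = P * r.
Proof. by rewrite -(pow_1 r) -centre_power_shift; congr Rpower; rewrite /=; field. Qed.

Lemma centre_pow_large : 1 <= P * r ^ 4.
Proof.
  rewrite -centre_power_shift; apply: Rpower_ge_1 => //.
  rewrite /=; lra.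
Qed.

Lemma deviation_sq v : v ^ 2 / m = r ^ 2 * (v / m) ^ 2.
Proof. by rewrite -sqrt_centre_sq; field; have := sqrt_centre_sq; nra. Qed.

Lemma deviation_quartic v : v ^ 4 / m ^ 2 = r ^ 4 * (v / m) ^ 4.
Proof. by rewrite -sqrt_centre_sq; field; have := sqrt_centre_sq; nra. Qed.

Lemma Rpower_taylor_at_centre tau : 0 < tau ->
  Rabs (Rpower tau a - Rpower m a * (1 + a * ((tau - m) / m) + a * (a - 1) / 2 * ((tau - m) / m) ^ 2))
  <= 8 * P * ((tau - m) ^ 2 / m + (tau - m) ^ 4 / m ^ 2).
Proof.
  move=> Htau; have Hr : 1 <= r by apply: Rpower_ge_1; lra.
  have HT := Rpower_taylor_scaled a m tau (/ r) Ha ltac:(lra) Htau ltac:(apply: Rinv_0_lt_compat; lra).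
  rewrite (_ : tau / m - 1 = (tau - m) / m) in HT; last by field; lra.
  apply: Rle_trans HT _; right.
  (* with e = 1/r the weights r^3/r and r^3 r are r^2 = m and r^4 = m^2 *)
  rewrite centre_pow_a deviation_sq deviation_quartic; field; lra.
Qed.

(* The lower-order terms of the expansion of G_a at tau are O(P) near the
   centre, by scaling out m and using the bounds on [1/2, oo) ... *)
Lemma lower_order_terms_near tau : m / 2 <= tau ->
  512 * Rpower tau (a - 3/2) + Rabs (Rpower tau (a - 1) - Rpower m (a - 1))
  <= 2050 * P * (1 + (tau - m) ^ 2 / m).
Proof.
  move=> Htau; set w := tau / m; set u := (tau - m) / m.
  rewrite deviation_sq -/u.
  have Hr : 1 <= r by apply: Rpower_ge_1; lra.
  have HP : 0 < P by exact: Rpower_gt_0.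
  have Hw2 : /2 <= w by rewrite /w; apply: (Rmult_le_reg_r m); [lra | field_simplify; lra].
  have Htw : tau = m * w by rewrite /w; field; lra.
  have E1 : Rpower tau (a - 1) = P * r * Rpower w (a - 1)
    by rewrite Htw -Rpower_mult_distr ?centre_pow_a_1 //; lra.
  have E3 : Rpower tau (a - 3/2) = P * Rpower w (a - 3/2)
    by rewrite Htw -Rpower_mult_distr //; lra.
  have HB1 := Rpower_taylor1 a w Ha Hw2.
  rewrite (_ : w - 1 = u) in HB1; last by rewrite /w /u; field; lra.
  have HB3 := Rpower_neg_le_4 w (a - 3/2) Hw2 ltac:(lra).
  rewrite E1 E3 centre_pow_a_1.
  rewrite (_ : P * r * Rpower w (a - 1) - P * r = P * r * (Rpower w (a - 1) - 1)); last ring.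
  rewrite Rabs_mult (Rabs_pos_eq (P * r)); last nra.
  have Hru : r * Rabs u <= (1 + r ^ 2 * u ^ 2) / 2.
  { have := pow2_ge_0 (r * Rabs u - 1); rewrite -(pow2_abs u); nra. }
  have T1 : 512 * (P * Rpower w (a - 3/2)) <= 2048 * P by nra.
  have T2 : P * r * Rabs (Rpower w (a - 1) - 1) <= 2 * P * (1 + r ^ 2 * u ^ 2).
  { apply: Rle_trans (_ : P * r * (4 * Rabs u) <= _).
    - apply: Rmult_le_compat_l => //; nra.
    - rewrite (_ : P * r * (4 * Rabs u) = 4 * P * (r * Rabs u)); last ring.
      nra. }
  have : 0 <= P * (r ^ 2 * u ^ 2) by have := pow2_ge_0 (r * u); rewrite Rpow_mult_distr; nra.
  lra.
Qed.

(* ... and O(P (tau-m)^4/m^2) far from it, where |tau - m| > m/2 and every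
   term is O(1). *)
Lemma lower_order_terms_far tau : 1 <= tau -> tau < m / 2 ->
  512 * Rpower tau (a - 3/2) + Rabs (Rpower tau (a - 1) - Rpower m (a - 1))
  <= 8300 * P * ((tau - m) ^ 4 / m ^ 2).
Proof.
  move=> Htau Hfar; set u := (tau - m) / m.
  rewrite deviation_quartic -/u.
  have HP : 0 < P by exact: Rpower_gt_0.
  have Hu4 : 1 <= 16 * u ^ 4.
  { have : u < - / 2 by rewrite /u; apply: (Rmult_lt_reg_r m); [lra | field_simplify; lra].
    move=> Hu; have : 1/4 <= u ^ 2 by nra.
    rewrite (_ : u ^ 4 = (u ^ 2) ^ 2); [nra | ring]. }
  have := Rpower_le_1_neg tau (a - 3/2) Htau ltac:(lra).
  have := Rpower_le_1_neg tau (a - 1) Htau ltac:(lra).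
  have := Rpower_le_1_neg m (a - 1) Hm ltac:(lra).
  have := Rpower_gt_0 tau (a - 1); have := Rpower_gt_0 m (a - 1).
  move=> ? ? ? ? ?.
  have Hdiff : Rabs (Rpower tau (a - 1) - Rpower m (a - 1)) <= 1 by apply: Rabs_le; lra.
  have : 1 <= 16 * (P * (r ^ 4 * u ^ 4)).
  { rewrite (_ : 16 * (P * (r ^ 4 * u ^ 4)) = 16 * u ^ 4 * (P * r ^ 4)); last ring.
    have := centre_pow_large; nra. }
  lra.
Qed.

Lemma lower_order_terms tau : 1 <= tau ->
  512 * Rpower tau (a - 3/2) + Rabs (Rpower tau (a - 1) - Rpower m (a - 1))
  <= 9000 * P * (1 + (tau - m) ^ 2 / m + (tau - m) ^ 4 / m ^ 2).
Proof.
  move=> Htau; have HP : 0 < P by exact: Rpower_gt_0.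
  have Hsq : 0 <= P * ((tau - m) ^ 2 / m)
    by apply: Rmult_le_pos; [lra | apply: Rdiv_le_0_compat; [exact: pow2_ge_0 | lra]].
  have Hqu : 0 <= P * ((tau - m) ^ 4 / m ^ 2).
  { apply: Rmult_le_pos; first lra.
    apply: Rdiv_le_0_compat; last by apply: pow_lt; lra.
    rewrite (_ : (tau - m) ^ 4 = ((tau - m) ^ 2) ^ 2); [exact: pow2_ge_0 | ring]. }
  case: (Rle_dec (m / 2) tau) => Hnear.
  - have := lower_order_terms_near tau Hnear; lra.
  - have := lower_order_terms_far tau Htau ltac:(lra); lra.
Qed.

Lemma expansion_at_origin :
  Rabs (Rpower m a * (1 + a * -1 + a * (a - 1) / 2 * (-1) ^ 2) + a * (a - 1) * Rpower m (a - 1))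
  <= 2 * P * m ^ 2.
Proof.
  have HP : 0 < P by exact: Rpower_gt_0.
  have Hr : 1 <= r by apply: Rpower_ge_1; lra.
  rewrite centre_pow_a centre_pow_a_1 -sqrt_centre_sq (_ : (r * r) ^ 2 = r ^ 4); last ring.
  have Hr34 : r ^ 3 <= r ^ 4 by apply: Rle_pow; [lra | lia].
  have Hr14 : r <= r ^ 4 by rewrite -{1}(pow_1 r); apply: Rle_pow; [lra | lia].
  have HT0 : 0 <= 1 + a * -1 + a * (a - 1) / 2 * (-1) ^ 2 <= 1 by rewrite /=; nra.
  have A1 : 0 <= P * r ^ 3 * (1 + a * -1 + a * (a - 1) / 2 * (-1) ^ 2) <= P * r ^ 4.
  { have : 0 <= P * r ^ 3 by apply: Rmult_le_pos; [lra | apply: pow_le; lra].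
    split; [nra | apply: Rle_trans (_ : P * r ^ 3 * 1 <= _); nra]. }
  have A2 : 0 <= - (a * (a - 1)) * (P * r) <= P * r ^ 4.
  { have : 0 <= - (a * (a - 1)) <= 1 by nra.
    have : 0 <= P * r by nra.
    split; [nra | apply: Rle_trans (_ : 1 * (P * r) <= _); nra]. }
  apply: Rabs_le; split; nra.
Qed.

Lemma gamma_factor_at_centre t :
  Rabs (gamma_factor a t - (Rpower m a * (1 + a * ((INR t - m) / m)
                                           + a * (a - 1) / 2 * ((INR t - m) / m) ^ 2)
                            + a * (a - 1) * Rpower m (a - 1)))
  <= 10000 * P * (1 + (INR t - m) ^ 2 / m + (INR t - m) ^ 4 / m ^ 2).
Proof.
  have HP : 0 < P by exact: Rpower_gt_0.
  have Hsq : 0 <= (INR t - m) ^ 2 / m by apply: Rdiv_le_0_compat; [apply: pow2_ge_0 | lra].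
  have Hqu : 0 <= (INR t - m) ^ 4 / m ^ 2.
  { apply: Rdiv_le_0_compat; last by apply: pow_lt; lra.
    rewrite (_ : (INR t - m) ^ 4 = ((INR t - m) ^ 2) ^ 2); [apply: pow2_ge_0 | ring]. }
  have Haa : 0 <= - (a * (a - 1)) <= 1 by nra.
  rewrite /gamma_factor; case: Nat.eqb_spec => Ht0.
  - (* t = 0: G_a vanishes and the expansion is O(P m^2) *)
    subst t; have H0 := expansion_at_origin.
    have E1 : (INR 0 - m) / m = -1 by rewrite /=; field; lra.
    have E4 : (INR 0 - m) ^ 4 / m ^ 2 = m ^ 2 by rewrite /=; field; lra.
    rewrite E1 E4 Rminus_0_l Rabs_Ropp.
    have : 0 <= P * ((INR 0 - m) ^ 2 / m) by apply: Rmult_le_pos; lra.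
    have : 0 <= P * m ^ 2 by apply: Rmult_le_pos; [lra | exact: pow2_ge_0].
    lra.
  -
    have Ht : (1 <= t)%nat by lia.
    have Htau : 1 <= INR t by apply: (le_INR 1).
    have H1 := gamma_factor_expansion a t Ha Ht.
    rewrite /gamma_factor in H1; case: Nat.eqb_spec H1 => [|_] H1; first lia.
    have H2 := Rpower_taylor_at_centre (INR t) ltac:(lra).
    have H3 := lower_order_terms (INR t) Htau.
    set G := Rpower 2 a * _ in H1 *.
    set A := Rpower m a * _ in H2 *.
    rewrite (_ : G - (A + a * (a - 1) * Rpower m (a - 1))
               = (G - Rpower (INR t) a - a * (a - 1) * Rpower (INR t) (a - 1))
                 + (Rpower (INR t) a - A)
                 + a * (a - 1) * (Rpower (INR t) (a - 1) - Rpower m (a - 1))); last ring.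
    apply: Rle_trans (Rabs_triang _ _) _.
    apply: Rle_trans (Rplus_le_compat_r _ _ _ (Rabs_triang _ _)) _.
    rewrite (Rabs_mult (a * (a - 1))) (Rabs_left1 (a * (a - 1))); last nra.
    have := Rabs_pos (Rpower (INR t) (a - 1) - Rpower m (a - 1)).
    move=> ?; nra.
Qed.

End AroundTheMean.

Lemma bin_fourth_moment_le q d : 0 <= q <= 1 ->
  INR d * q * (1 - q) * (1 + 3 * (INR d - 2) * q * (1 - q))
  <= INR d * q + 3 * (INR d * q) ^ 2.
Proof.
  move=> Hq; set m := INR d * q; have Hm : 0 <= m by apply: Rmult_le_pos; [exact: pos_INR | lra].
  rewrite (_ : m * (1 - q) * (1 + 3 * (INR d - 2) * q * (1 - q))
             = m * (1 - q) + 3 * m * (1 - q) ^ 2 * (m - 2 * q)); last by rewrite /m; ring.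
  have : 0 <= (1 - q) ^ 2 <= 1 by nra.
  move=> ?; have : 3 * m * (1 - q) ^ 2 * (m - 2 * q) <= 3 * m ^ 2.
  { case: (Rle_dec 0 (m - 2 * q)) => Hmq.
    - apply: Rle_trans (_ : 3 * m * 1 * (m - 2 * q) <= _); last nra.
      apply: Rmult_le_compat_r => //; nra.
    - have : 0 <= 3 * m * (1 - q) ^ 2 by nra.
      nra. }
  nra.
Qed.

Lemma bin_expect_deviation_weight q d : 0 < q <= 1 -> 1 <= INR d * q ->
  bin_expect q d (fun t => 1 + (INR t - INR d * q) ^ 2 / (INR d * q)
                           + (INR t - INR d * q) ^ 4 / (INR d * q) ^ 2) <= 6.
Proof.
  move=> Hq Hm; have [_ [M2 [_ M4]]] := bin_central_moments q d.
  have M4b := bin_fourth_moment_le q d ltac:(lra).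
  set m := INR d * q in Hm M2 M4 M4b *.
  rewrite (bin_expect_ext q d _ (fun t => 1 + 0 * centred q d t + / m * centred q d t ^ 2
        + 0 * centred q d t ^ 3 + / m ^ 2 * centred q d t ^ 4)); last first.
  { by move=> t _; rewrite /centred -/m; field; lra. }
  rewrite bin_expect_poly4 M2 M4.
  have : / m * (m * (1 - q)) <= 1 by rewrite (_ : / m * (m * (1 - q)) = 1 - q); [lra | field; lra].
  have : / m ^ 2 * (m + 3 * m ^ 2) <= 4.
  { rewrite (_ : / m ^ 2 * (m + 3 * m ^ 2) = / m + 3); last by field; lra.
    have : / m <= 1 by rewrite -Rinv_1; apply: Rinv_le_contravar; lra.
    lra. }
  have : / m ^ 2 * (m * (1 - q) * (1 + 3 * (INR d - 2) * q * (1 - q))) <= / m ^ 2 * (m + 3 * m ^ 2).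
  { apply: Rmult_le_compat_l => //; apply: Rlt_le; apply: Rinv_0_lt_compat; apply: pow_lt; lra. }
  lra.
Qed.

Lemma bin_expect_gamma_factor a q d : 0 < a <= 1 -> 0 < q <= 1 -> 1 <= INR d * q ->
  Rabs (bin_expect q d (gamma_factor a)
        - Rpower (INR d * q) a * (1 + a * (a - 1) * (3 - q) / 2 / (INR d * q)))
  <= 60000 * Rpower (INR d * q) (a - 3/2).
Proof.
  move=> Ha Hq Hm; have HW := bin_expect_deviation_weight q d Hq Hm.
  set m := INR d * q in Hm HW *.
  have [M1 [M2 _]] := bin_central_moments q d; rewrite -/m in M2.
  have Hm0 : 0 < m by lra.
  set P := Rpower m (a - 3/2); have HP : 0 < P by exact: Rpower_gt_0.
  have HmA1 : Rpower m (a - 1) = Rpower m a / m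
    by rewrite (_ : a - 1 = a + -1) ?Rpower_plus ?Rpower_Ropp ?Rpower_1 /Rdiv //; ring.
  set main := fun t => Rpower m a * (1 + a * ((INR t - m) / m) + a * (a - 1) / 2 * ((INR t - m) / m) ^ 2)
                       + a * (a - 1) * Rpower m (a - 1).
  have HE := bin_expect_abs q d _ _ ltac:(lra) (fun t _ => gamma_factor_at_centre a m Ha Hm t).
  rewrite bin_expect_minus bin_expect_scal -/P -/main in HE.
  (* the expansion has mean m^a (1 + c/m), by the first two central moments *)
  have Emain : bin_expect q d main = Rpower m a * (1 + a * (a - 1) * (3 - q) / 2 / m).
  { rewrite (bin_expect_ext q d main (fun t => (Rpower m a + a * (a - 1) * Rpower m (a - 1))
        + (Rpower m a * a / m) * centred q d t
        + (Rpower m a * (a * (a - 1) / 2) / m ^ 2) * centred q d t ^ 2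
        + 0 * centred q d t ^ 3 + 0 * centred q d t ^ 4)); last by move=> t _; rewrite /main /centred -/m; field; lra.
    rewrite bin_expect_poly4 M1 M2 HmA1; field; lra. }
  have : 10000 * P * bin_expect q d (fun t => 1 + (INR t - m) ^ 2 / m + (INR t - m) ^ 4 / m ^ 2)
         <= 60000 * P by nra.
  rewrite Emain in HE; lra.
Qed.

(* I_{1,q}(s,d) = q^(-s) E[G_{s/2}(T)]: the sum over t = 1..d is the
   expectation of G_{s/2}, which vanishes at t = 0. *)
Lemma I1q_as_expectation q s d : (1 <= d)%nat ->
  I1q q s d = Rpower q (- s) * bin_expect q d (gamma_factor (s / 2)).
Proof.
  move=> Hd; rewrite /I1q Rmult_assoc; congr Rmult.
  rewrite scal_sum /bin_expect (decomp_sum _ d) /=; last lia.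
  rewrite (_ : Init.Nat.pred d = (d - 1)%nat); last lia.
  rewrite /gamma_factor /= Rmult_0_r Rplus_0_l.
  apply: sum_eq => i _; rewrite /Rdiv (_ : s * / 2 = s / 2); [ring | done].
Qed.

Lemma sigma_bar_sq q s d : 0 < q -> 0 < s -> (1 <= d)%nat ->
  0 < bin_expect q d (gamma_factor (s / 2)) ->
  sigma_bar q s d ^ 2 = q ^ 2 * Rpower (bin_expect q d (gamma_factor (s / 2))) (- (2 / s)).
Proof.
  move=> Hq Hs Hd HE.
  rewrite /sigma_bar I1q_as_expectation // Rpower_sq -Rpower_mult_distr //; last exact: Rpower_gt_0.
  rewrite Rpower_mult (_ : - s * (2 * - (1 / s)) = INR 2); last by rewrite /=; field; lra.
  by rewrite Rpower_pow // (_ : 2 * - (1 / s) = - (2 / s)); last field; lra.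
Qed.

(* G_1(t) = t, since Gamma(t/2 + 1) = (t/2) Gamma(t/2). *)
Lemma gamma_factor_1 t : gamma_factor 1 t = INR t.
Proof.
  rewrite /gamma_factor; case: Nat.eqb_spec => [-> // | Ht].
  have Htau : 1 <= INR t by apply: (le_INR 1); lia.
  have HG : 0 < Gamma (INR t / 2) by case: (Gamma_spec (INR t / 2) ltac:(lra)).
  rewrite Rpower_1 ?Gamma_succ; [field | lra | lra]; lra.
Qed.

Lemma bin_expect_id q d : bin_expect q d INR = INR d * q.
Proof.
  have [M1 _] := bin_central_moments q d.
  rewrite (bin_expect_ext q d _ (fun t => centred q d t + INR d * q)); last by move=> t _; rewrite /centred; ring.
  by rewrite bin_expect_plus M1 bin_expect_const; ring.
Qed.

Lemma sigma_bar_sq_at_2 q d : 0 < q <= 1 -> (1 <= d)%nat -> sigma_bar q 2 d ^ 2 = q / INR d.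
Proof.
  move=> Hq Hd; have HdR : 1 <= INR d by apply: (le_INR 1).
  have HE : bin_expect q d (gamma_factor (2 / 2)) = INR d * q.
  { rewrite (_ : 2 / 2 = 1); last field.
    by rewrite (bin_expect_ext q d _ INR) ?bin_expect_id // => t _; exact: gamma_factor_1. }
  have Hm : 0 < INR d * q by nra.
  rewrite sigma_bar_sq ?HE //; try lra.
  rewrite (_ : - (2 / 2) = - 1); last field.
  by rewrite Rpower_Ropp Rpower_1 //; field; lra.
Qed.

(** * The second-order asymptotics *)

Definition scaled_error (q s : R) (d : nat) : R :=
  INR d ^ 2 * (sigma_bar q s d ^ 2 - q / INR d - (3 - q) * (2 - s) / (4 * INR d ^ 2)).

(* Writing E[G_a(T)] = m^a (1 + z), the scaled error splits into the deviation
   of z from c/m and the second-order Taylor remainder of (1+z)^(-1/a). *)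
Lemma scaled_error_decomposition q s d z : 0 < q <= 1 -> 0 < s <= 2 -> (1 <= d)%nat -> -1 < z ->
  bin_expect q d (gamma_factor (s / 2)) = Rpower (INR d * q) (s / 2) * (1 + z) ->
  scaled_error q s d
  = - (2 / s) * (INR d * q) * (z - s / 2 * (s / 2 - 1) * (3 - q) / 2 / (INR d * q))
    + INR d * q * (Rpower (1 + z) (- (2 / s)) - 1 + 2 / s * z).
Proof.
  move=> Hq Hs Hd Hz HE; have HdR : 1 <= INR d by apply: (le_INR 1).
  have Hm : 0 < INR d * q by nra.
  have HEpos : 0 < Rpower (INR d * q) (s / 2) * (1 + z)
    by apply: Rmult_lt_0_compat; [exact: Rpower_gt_0 | lra].
  rewrite /scaled_error sigma_bar_sq ?HE //; try lra.
  rewrite -Rpower_mult_distr ?Rpower_mult; try lra; last exact: Rpower_gt_0.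
  rewrite (_ : s / 2 * - (2 / s) = - 1); last by field; lra.
  rewrite (Rpower_Ropp (INR d * q) 1) Rpower_1 //; field; lra.
Qed.

Lemma is_lim_seq_0_of_sqrt_bound (u : nat -> R) q K M0 : 0 < q ->
  (forall d, M0 <= INR d * q -> Rabs (u d) <= K / Rpower (INR d * q) (/2)) ->
  is_lim_seq u 0.
Proof.
  move=> Hq Hb; apply/is_lim_seq_spec => eps; have He := cond_pos eps.
  have [N HN] := INR_unbounded ((Rabs M0 + 1 + (K / eps) ^ 2) / q).
  exists N => n Hn.
  have HnN : INR N <= INR n by apply: le_INR; lia.
  set m := INR n * q.
  have HK2 : 0 <= (K / eps) ^ 2 by exact: pow2_ge_0.
  have Hm : Rabs M0 + 1 + (K / eps) ^ 2 < m.
  { apply: Rlt_le_trans (_ : INR N * q <= m); last by apply: Rmult_le_compat_r; lra.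
    apply: (Rmult_lt_reg_r (/ q)); first exact: Rinv_0_lt_compat.
    rewrite (_ : INR N * q * / q = INR N); last by field; lra.
    by rewrite /Rdiv in HN. }
  have HM0 := Rle_abs M0; have HM0' := Rabs_pos M0.
  have Hbd := Hb n ltac:(rewrite -/m; lra); rewrite -/m in Hbd.
  set r := Rpower m (/2) in Hbd.
  have Hrr : r * r = m by apply: Rpower_half_sq; lra.
  have Hr0 : 0 < r by exact: Rpower_gt_0.
  have Hr : K / eps < r.
  { case: (Rlt_dec (K / eps) r) => // Hn'; exfalso.
    case: (Rle_dec 0 (K / eps)) => H0; last lra.
    have : r * r <= (K / eps) * (K / eps) by apply: Rmult_le_compat; lra.
    rewrite /= in Hm; lra. }
  rewrite Rminus_0_r; apply: Rle_lt_trans Hbd _.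
  apply: (Rmult_lt_reg_r r) => //; rewrite (_ : K / r * r = K); last by field; lra.
  apply: (Rmult_lt_reg_r (/ eps)); first exact: Rinv_0_lt_compat.
  by rewrite (_ : eps * r * / eps = r); [exact: Hr | field; lra].
Qed.

Lemma relative_deviation_bound a q d : 0 < a <= 1 -> 0 < q <= 1 -> 1 <= INR d * q ->
  Rabs (bin_expect q d (gamma_factor a) / Rpower (INR d * q) a - 1
        - a * (a - 1) * (3 - q) / 2 / (INR d * q))
  <= 60000 / Rpower (INR d * q) (/2) ^ 3.
Proof.
  move=> Ha Hq Hm; have HE := bin_expect_gamma_factor a q d Ha Hq Hm.
  set m := INR d * q in Hm HE *; set E := bin_expect q d (gamma_factor a) in HE *.
  have HmA : Rpower m a = Rpower m (a - 3/2) * Rpower m (/2) ^ 3 by exact: centre_pow_a.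
  have := Rpower_gt_0 m a; have := Rpower_gt_0 m (/2) => Hr HmA0.
  rewrite (_ : E / Rpower m a - 1 - _ = (E - Rpower m a * (1 + a * (a - 1) * (3 - q) / 2 / m)) / Rpower m a);
    last by field; lra.
  rewrite Rabs_div; last lra.
  rewrite (Rabs_pos_eq (Rpower m a)); last lra.
  apply: (Rmult_le_reg_r (Rpower m a)) => //.
  rewrite (_ : Rabs _ / Rpower m a * Rpower m a = Rabs (E - Rpower m a * (1 + a * (a - 1) * (3 - q) / 2 / m)));
    last by field; lra.
  rewrite (_ : 60000 / Rpower m (/2) ^ 3 * Rpower m a = 60000 * Rpower m (a - 3/2)); first lra.
  by rewrite HmA; field; lra.
Qed.

Lemma leading_coefficient_bound a q : 0 < a <= 1 -> 0 < q <= 1 ->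
  Rabs (a * (a - 1) * (3 - q) / 2) <= 1.
Proof.
  move=> Ha Hq; have := pow2_ge_0 (a - 1/2) => ?.
  have : - 1/4 <= a * (a - 1) <= 0 by nra.
  move=> ?; apply: Rabs_le; split; nra.
Qed.

Lemma small_relative_deviation r z c B : 0 <= B -> 2 * (1 + B) <= r -> Rabs c <= 1 ->
  Rabs (z - c / (r * r)) <= B / r ^ 3 -> Rabs z <= (1 + B) / r ^ 2 /\ - / 2 <= z.
Proof.
  move=> HB Hr Hc Hz1; have Hr0 : 0 < r by lra.
  have Hcm : Rabs (c / (r * r)) <= 1 / r ^ 2.
  { rewrite Rabs_div ?(Rabs_pos_eq (r * r)); try nra.
    apply: (Rmult_le_reg_r (r * r)); first nra.
    rewrite (_ : Rabs c / (r * r) * (r * r) = Rabs c); last by field; lra.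
    rewrite (_ : 1 / r ^ 2 * (r * r) = 1); [lra | field; lra]. }
  have HBr : B / r ^ 3 <= B / r ^ 2.
  { apply: Rmult_le_compat_l => //; apply: Rinv_le_contravar; rewrite /=; nra. }
  have Hzb : Rabs z <= (1 + B) / r ^ 2.
  { have := Rabs_triang (z - c / (r * r)) (c / (r * r)).
    rewrite (_ : z - c / (r * r) + c / (r * r) = z); last ring.
    move=> ?; rewrite (_ : (1 + B) / r ^ 2 = B / r ^ 2 + 1 / r ^ 2); [lra | field; lra]. }
  split => //.
  have : Rabs z <= / 2.
  { apply: Rle_trans Hzb _; apply: (Rmult_le_reg_r (r ^ 2)); first nra.
    rewrite (_ : (1 + B) / r ^ 2 * r ^ 2 = 1 + B); [nra | field; lra]. }
  have := Rle_abs (- z); rewrite Rabs_Ropp; lra.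
Qed.

Lemma inverse_power_remainder_bound b r z C : 1 <= b -> 1 <= r -> 0 <= C ->
  Rabs z <= C / r ^ 2 -> - / 2 <= z ->
  r * r * Rabs (Rpower (1 + z) (- b) - 1 + b * z)
  <= b * (b + 1) * Rpower 2 (b + 2) * C ^ 2 / r.
Proof.
  move=> Hb Hr HC Hz Hz2; set Mb := b * (b + 1) * Rpower 2 (b + 2).
  have HMb : 0 <= Mb by rewrite /Mb; have := Rpower_gt_0 2 (b + 2); nra.
  have HT := Rpower_neg_taylor2 b z Hb Hz2; rewrite -/Mb in HT.
  have Hz4 : z ^ 2 <= (C / r ^ 2) ^ 2 by rewrite -pow2_abs; apply: pow_maj_Rabs; rewrite Rabs_Rabsolu.
  apply: Rle_trans (_ : r * r * (Mb * (C / r ^ 2) ^ 2) <= _).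
  - apply: Rmult_le_compat_l; first nra.
    apply: Rle_trans HT _; exact: Rmult_le_compat_l.
  - rewrite (_ : r * r * (Mb * (C / r ^ 2) ^ 2) = Mb * C ^ 2 / r * / r); last by field; lra.
    have : 0 <= Mb * C ^ 2 / r by apply: Rdiv_le_0_compat; [apply: Rmult_le_pos => //; exact: pow2_ge_0 | lra].
    have : / r <= 1 by rewrite -Rinv_1; apply: Rinv_le_contravar; lra.
    move=> ? ?; nra.
Qed.

Lemma scaled_error_bound q s : 0 < q <= 1 -> 0 < s <= 2 ->
  exists K M0, forall d, M0 <= INR d * q ->
    Rabs (scaled_error q s d) <= K / Rpower (INR d * q) (/2).
Proof.
  move=> Hq Hs; set a := s / 2; set b := 2 / s; set B := 60000.
  have Ha : 0 < a <= 1 by rewrite /a; lra.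
  have Hb : 1 <= b by rewrite /b; apply: (Rmult_le_reg_r s); [lra | rewrite /Rdiv Rmult_assoc Rinv_l; lra].
  exists (b * B + b * (b + 1) * Rpower 2 (b + 2) * (1 + B) ^ 2), ((2 * (1 + B)) ^ 2) => d Hd.
  set m := INR d * q in Hd *.
  have Hm1 : 1 <= m by rewrite /B in Hd; lra.
  have Hd1 : (1 <= d)%nat by apply: INR_le; rewrite /=; rewrite /m in Hm1; nra.
  set r := Rpower m (/2); have Hrr : r * r = m by apply: Rpower_half_sq; lra.
  have Hr0 : 0 < r by exact: Rpower_gt_0.
  have Hr : 2 * (1 + B) <= r.
  { case: (Rle_dec (2 * (1 + B)) r) => // Hn; exfalso.
    have : r * r < (2 * (1 + B)) * (2 * (1 + B)) by apply: Rmult_le_0_lt_compat; lra.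
    rewrite /= in Hd; lra. }
  set c := a * (a - 1) * (3 - q) / 2.
  have Hc : Rabs c <= 1 by exact: leading_coefficient_bound.
  set E := bin_expect q d (gamma_factor a).
  set z := E / Rpower m a - 1.
  have Hz1 : Rabs (z - c / m) <= B / r ^ 3 by exact: relative_deviation_bound.
  rewrite -Hrr in Hz1.
  have [Hzb Hz2] := small_relative_deviation r z c B ltac:(rewrite /B; lra) Hr Hc Hz1.
  have HEz : E = Rpower m a * (1 + z) by rewrite /z; field; have := Rpower_gt_0 m a; lra.
  rewrite (scaled_error_decomposition q s d z) //; last lra.
  rewrite -/m -/b -/a -/c -Hrr.
  apply: Rle_trans (Rabs_triang _ _) _.
  rewrite Rabs_mult (Rabs_mult (- b)) (Rabs_mult (r * r)) Rabs_Ropp (Rabs_pos_eq b) ?(Rabs_pos_eq (r * r));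
    try nra.
  (* the deviation term is b m O(r^-3) and the remainder term is O(r^-1) *)
  have T1 : b * (r * r) * Rabs (z - c / (r * r)) <= b * B / r.
  { apply: Rle_trans (_ : b * (r * r) * (B / r ^ 3) <= _).
    - apply: Rmult_le_compat_l => //; nra.
    - rewrite (_ : b * (r * r) * (B / r ^ 3) = b * B / r); [lra | field; lra]. }
  have T2 := inverse_power_remainder_bound b r z (1 + B) Hb ltac:(rewrite /B in Hr; lra)
               ltac:(rewrite /B; lra) Hzb Hz2.
  rewrite (_ : (b * B + b * (b + 1) * Rpower 2 (b + 2) * (1 + B) ^ 2) / r
             = b * B / r + b * (b + 1) * Rpower 2 (b + 2) * (1 + B) ^ 2 / r); [lra | field; lra].
Qed.

Theorem mainTheorem13 (q : R) (hq : 0 < q <= 1) :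
  (forall d : nat, (1 <= d)%nat -> (sigma_bar q 2 d) ^ 2 = q / INR d) /\
  (forall s : R, 0 < s <= 2 ->
     is_lim_seq
       (fun d : nat => INR d ^ 2 *
          ((sigma_bar q s d) ^ 2 - q / INR d
           - (3 - q) * (2 - s) / (4 * INR d ^ 2)))
       0).
Proof.
  split => [d Hd | s Hs]; first exact: sigma_bar_sq_at_2.
  have [K [M0 Hbound]] := scaled_error_bound q s hq Hs.
  exact: (is_lim_seq_0_of_sqrt_bound (scaled_error q s) q K M0 (proj1 hq) Hbound).
Qed.
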